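(* Let $n$ be a positive integer, let $\mathbf{A}$ be an infinite $n$-generated subdirectly irreducible bi-Heyting algebra validating $LFC$, let $\mathfrak{X}=\mathbf{A}_*$ with greatest element $r$, and let $m$ be a minimal element of $\mathfrak{X}$ with $X=\{x:m<x\}\uplus min(\mathfrak{X})$ and such that every minimal $y\ne m$ has a unique immediate successor lying strictly above $m$. Write $\Downarrow x$ for the set of immediate predecessors of $x$, and $\uparrow m=\{x: m\le x\}$. Then: (i) if $x$ is an up limit, then $2\le|\Downarrow x|\le 2^n$; (ii) $\mathfrak{X}$ has no down limits; (iii) $\uparrow m$ is an infinite well-order; (iv) if $x$ is an immediate successor of $m$, then $|\Downarrow x|\le 2$; (v) if $m<x$, $x$ is not an immediate successor of $m$ and $x$ is not an up limit, then $x$ has exactly one immediate predecessor $z$ with $m<z$ and exactly one immediate predecessor $z$ with $m\not<z$.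
   Context: Bi-Heyting algebras are bounded distributive lattices with residuated $\to$ and $\leftarrow$. $\mathbf{A}_*$ is the bi-Esakia dual of $\mathbf{A}$: prime filters ordered by inclusion with the Priestley topology. For SI $\mathbf{A}$ validating $\mathsf{bi\text{-}LC}$ (bi-intuitionistic logic plus $(p\to q)\vee(q\to p)$), $\mathbf{A}_*$ is a bi-Esakia co-tree: it has a greatest element and principal upsets are chains. $LFC=\mathsf{bi\text{-}LC}+\beta(\mathfrak{F}_0)+\mathcal{J}(\mathfrak{F}_1)+\mathcal{J}(\mathfrak{F}_2)+\mathcal{J}(\mathfrak{F}_3)$. For a finite co-tree $\mathfrak{Y}$: - $\mathfrak{X}\not\models\beta(\mathfrak{Y})$ iff $\mathfrak{Y}$ order-embeds into $\mathfrak{X}$; - $\mathfrak{X}\not\models\mathcal{J}(\mathfrak{Y})$ iff there is a continuous surjective bi-p-morphism onto $\mathfrak{Y}$. The co-trees are: - $\mathfrak{F}_0$: $d<b<a$, $e<c<a$; - $\mathfrak{F}_1$: the chain $c<b<a$; - $\mathfrak{F}_2$: the chain $d<c<b<a$ plus $a'<a$, with $a'$ incomparable to $b,c,d$; - $\mathfrak{F}_3$: a top over three incomparable minimal points. A point $x$ with $m<x$ is an up limit if $x$ has no immediate predecessor in $\uparrow m$. A point $x\in\uparrow m\setminus\{r\}$ is a down limit if $x$ has no immediate successor. *)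

From Stdlib Require Import List Arith.
Import ListNotations.

Record biHeyting := BiHeyting {
  car :> Type;
  bot : car;
  top : car;
  meet : car -> car -> car;
  join : car -> car -> car;
  imp : car -> car -> car;
  coimp : car -> car -> car;
  meetC : forall a b, meet a b = meet b a;
  joinC : forall a b, join a b = join b a;
  meetA : forall a b c, meet a (meet b c) = meet (meet a b) c;
  joinA : forall a b c, join a (join b c) = join (join a b) c;
  meet_join_abs : forall a b, meet a (join a b) = a;
  join_meet_abs : forall a b, join a (meet a b) = a;
  distr : forall a b c, meet a (join b c) = join (meet a b) (meet a c);
  bot_least : forall a, meet bot a = bot;
  top_greatest : forall a, meet top a = a;
  imp_res : forall a b c,
    meet (meet c a) b = meet c a <-> meet c (imp a b) = c;
  coimp_res : forall a b c,
    meet (coimp a b) c = coimp a b <-> meet a (join b c) = a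
}.
Arguments bot {b0}. Arguments top {b0}.
Arguments meet {b0} _ _. Arguments join {b0} _ _.
Arguments imp {b0} _ _. Arguments coimp {b0} _ _.

Definition leA {A : biHeyting} (a b : A) : Prop := meet a b = a.

Definition congruence {A : biHeyting} (th : A -> A -> Prop) : Prop :=
  (forall a, th a a) /\ (forall a b, th a b -> th b a) /\
  (forall a b c, th a b -> th b c -> th a c) /\
  (forall a b c d, th a b -> th c d ->
     th (meet a c) (meet b d) /\ th (join a c) (join b d) /\
     th (imp a c) (imp b d) /\ th (coimp a c) (coimp b d)).

Definition nonidentity {A : biHeyting} (th : A -> A -> Prop) : Prop :=
  exists a b, a <> b /\ th a b.

Definition subdirectly_irreducible (A : biHeyting) : Prop :=
  exists mu : A -> A -> Prop, congruence mu /\ nonidentity mu /\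
    forall th, congruence th -> nonidentity th -> forall a b, mu a b -> th a b.

Definition subalg_closed {A : biHeyting} (S : A -> Prop) : Prop :=
  S bot /\ S top /\
  (forall a b, S a -> S b ->
     S (meet a b) /\ S (join a b) /\ S (imp a b) /\ S (coimp a b)).

Definition generated_by {A : biHeyting} (gens : list A) : Prop :=
  forall S : A -> Prop, subalg_closed S -> (forall g, In g gens -> S g) ->
  forall a, S a.

Definition n_generated (n : nat) (A : biHeyting) : Prop :=
  exists gens : list A, length gens = n /\ generated_by gens.

Definition finite_set {T : Type} (S : T -> Prop) : Prop :=
  exists l : list T, forall x, S x -> In x l.
Definition at_most {T : Type} (k : nat) (S : T -> Prop) : Prop :=
  exists l : list T, length l <= k /\ forall x, S x -> In x l.
Definition at_least_two {T : Type} (S : T -> Prop) : Prop :=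
  exists x y, x <> y /\ S x /\ S y.

Definition infinite_alg (A : biHeyting) : Prop := ~ finite_set (fun _ : A => True).

Definition prime_filter {A : biHeyting} (F : A -> Prop) : Prop :=
  F top /\ ~ F bot /\
  (forall a b, leA a b -> F a -> F b) /\
  (forall a b, F a -> F b -> F (meet a b)) /\
  (forall a b, F (join a b) -> F a \/ F b).

Definition pt (A : biHeyting) : Type := {F : A -> Prop | prime_filter F}.

Definition ptle {A : biHeyting} (P Q : pt A) : Prop :=
  forall a, proj1_sig P a -> proj1_sig Q a.
Definition ptlt {A : biHeyting} (P Q : pt A) : Prop := ptle P Q /\ P <> Q.

(* Priestley topology: subbasis phi(a) = {P | a in P} and their complements.
   A basic open set is a finite intersection of subbasic sets, coded by a
   list of pairs (a, true) for phi(a), (a, false) for its complement. *)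
Definition basic {A : biHeyting} (l : list (A * bool)) (P : pt A) : Prop :=
  forall ab, In ab l ->
    (snd ab = true -> proj1_sig P (fst ab)) /\
    (snd ab = false -> ~ proj1_sig P (fst ab)).

Definition open_set {A : biHeyting} (U : pt A -> Prop) : Prop :=
  forall P, U P -> exists l, basic l P /\ forall Q, basic l Q -> U Q.

Definition order_embeds {A : biHeyting} {Y : Type} (leY : Y -> Y -> Prop)
  (f : Y -> pt A) : Prop :=
  forall y y', leY y y' <-> ptle (f y) (f y').

Definition bi_p_morphism {A : biHeyting} {Y : Type} (leY : Y -> Y -> Prop)
  (f : pt A -> Y) : Prop :=
  (forall x x', ptle x x' -> leY (f x) (f x')) /\
  (forall x y, leY (f x) y -> exists x', ptle x x' /\ f x' = y) /\
  (forall x y, leY y (f x) -> exists x', ptle x' x /\ f x' = y).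

(* continuity w.r.t. the discrete topology on the finite co-tree Y *)
Definition continuous_to {A : biHeyting} {Y : Type} (f : pt A -> Y) : Prop :=
  forall S : Y -> Prop, open_set (fun P => S (f P)).

Definition surjective {X Y : Type} (f : X -> Y) : Prop := forall y, exists x, f x = y.

Definition maps_onto {A : biHeyting} {Y : Type} (leY : Y -> Y -> Prop) : Prop :=
  exists f : pt A -> Y, continuous_to f /\ surjective f /\ bi_p_morphism leY f.

Inductive F0 := F0a | F0b | F0c | F0d | F0e.
Definition F0lt (x y : F0) : Prop :=
  match x, y with
  | F0b, F0a | F0c, F0a | F0d, F0b | F0d, F0a | F0e, F0c | F0e, F0a => True
  | _, _ => False end.
Definition F0le (x y : F0) : Prop := x = y \/ F0lt x y.

Inductive F1 := F1a | F1b | F1c.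
Definition F1lt (x y : F1) : Prop :=
  match x, y with
  | F1b, F1a | F1c, F1a | F1c, F1b => True
  | _, _ => False end.
Definition F1le (x y : F1) : Prop := x = y \/ F1lt x y.

Inductive F2 := F2a | F2b | F2c | F2d | F2a'.
Definition F2lt (x y : F2) : Prop :=
  match x, y with
  | F2b, F2a | F2c, F2a | F2d, F2a | F2c, F2b | F2d, F2b | F2d, F2c
  | F2a', F2a => True
  | _, _ => False end.
Definition F2le (x y : F2) : Prop := x = y \/ F2lt x y.

Inductive F3 := F3t | F3u1 | F3u2 | F3u3.
Definition F3lt (x y : F3) : Prop :=
  match x, y with
  | F3u1, F3t | F3u2, F3t | F3u3, F3t => True
  | _, _ => False end.
Definition F3le (x y : F3) : Prop := x = y \/ F3lt x y.

Definition validates_biLC (A : biHeyting) : Prop :=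
  forall a b : A, join (imp a b) (imp b a) = top.

Definition validates_LFC (A : biHeyting) : Prop :=
  validates_biLC A /\
  (* A |= beta(F0)  iff  F0 does not order-embed into A_* *)
  ~ (exists f : F0 -> pt A, order_embeds F0le f) /\
  (* A |= J(Fi)  iff  no continuous surjective bi-p-morphism A_* -> Fi *)
  ~ maps_onto (A := A) F1le /\
  ~ maps_onto (A := A) F2le /\
  ~ maps_onto (A := A) F3le.

Definition minimal_pt {A : biHeyting} (x : pt A) : Prop :=
  forall y, ptle y x -> y = x.
Definition greatest_pt {A : biHeyting} (r : pt A) : Prop :=
  forall x, ptle x r.
Definition immpred {A : biHeyting} (z x : pt A) : Prop :=
  ptlt z x /\ ~ (exists w, ptlt z w /\ ptlt w x).

Definition up_limit {A : biHeyting} (m x : pt A) : Prop :=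
  ptlt m x /\ ~ (exists z, ptle m z /\ immpred z x).

Definition down_limit {A : biHeyting} (m r x : pt A) : Prop :=
  ptle m x /\ x <> r /\ ~ (exists z, immpred x z).

Definition infinite_well_order_up {A : biHeyting} (m : pt A) : Prop :=
  (forall x y, ptle m x -> ptle m y -> ptle x y \/ ptle y x) /\
  (forall S : pt A -> Prop, (forall x, S x -> ptle m x) -> (exists x, S x) ->
     exists x, S x /\ forall y, S y -> ptle x y) /\
  ~ finite_set (fun x => ptle m x).

(* By bi-LC the points above m form a chain C, and every
   other point is a leaf attached to C at its unique immediate successor. As A is generated
   by g_1, ..., g_n, an induction on terms shows that a leaf is determined by its attachment
   point and its profile (the g_i it contains), whence the bound 2^n.
   The central collapse argument: on an interval of C on which the generators are constant
   and every profile attached in the interval recurs arbitrarily low in it, every element of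
   A is constant (induction on terms again), so by prime filter separation the interval is a
   single point. Near a down limit, or just below an up limit at which fewer than two
   profiles are cofinal, such a nontrivial interval would exist. Hence there are no down
   limits, so C is well ordered, and every up limit has at least two immediate
   predecessors: the limits of the attached points carrying two distinct cofinal profiles.
   Parts (iv) and (v) follow by refuting J(F1), J(F2) and J(F3) with explicit continuous
   bi-p-morphisms, whose fibres are cut out by elements separating consecutive chain points. *)

From Stdlib Require Import List Arith Lia.
From Stdlib Require Import Classical ClassicalEpsilon FunctionalExtensionality.
From Stdlib Require Import PropExtensionality ProofIrrelevance.
Import ListNotations.

Section Lattice.
Context {A : biHeyting}.
Implicit Types a b c d g : A.

Lemma meet_idem a : meet a a = a.
Proof.
  pose proof (meet_join_abs A a (meet a a)) as H.
  rewrite (join_meet_abs A a a) in H. exact H.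
Qed.

Lemma leA_refl a : leA a a.
Proof. apply meet_idem. Qed.

Lemma leA_trans a b c : leA a b -> leA b c -> leA a c.
Proof. unfold leA; intros H1 H2. rewrite <- H1, <- meetA, H2. reflexivity. Qed.

Lemma leA_antisym a b : leA a b -> leA b a -> a = b.
Proof. unfold leA; intros H1 H2. rewrite <- H1, meetC. exact H2. Qed.

Lemma meet_leA_l a b : leA (meet a b) a.
Proof. unfold leA. rewrite (meetC A (meet a b) a), meetA, meet_idem. reflexivity. Qed.

Lemma meet_leA_r a b : leA (meet a b) b.
Proof. unfold leA. rewrite <- meetA, meet_idem. reflexivity. Qed.

Lemma leA_meet a b c : leA c a -> leA c b -> leA c (meet a b).
Proof. unfold leA; intros H1 H2. rewrite meetA, H1, H2. reflexivity. Qed.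

Lemma join_leA_l a b : leA a (join a b).
Proof. apply meet_join_abs. Qed.

Lemma join_leA_r a b : leA b (join a b).
Proof. rewrite joinC. apply join_leA_l. Qed.

Lemma leA_join a b c : leA a c -> leA b c -> leA (join a b) c.
Proof.
  unfold leA; intros H1 H2. rewrite meetC, distr.
  rewrite (meetC A c a), (meetC A c b), H1, H2. reflexivity.
Qed.

Lemma leA_top a : leA a top.
Proof. unfold leA. rewrite meetC. apply top_greatest. Qed.

Lemma bot_leA a : leA bot a.
Proof. apply bot_least. Qed.

Lemma meet_leA_mono a b c d : leA a b -> leA c d -> leA (meet a c) (meet b d).
Proof.
  intros H1 H2. apply leA_meet.
  - eapply leA_trans; [apply meet_leA_l|exact H1].
  - eapply leA_trans; [apply meet_leA_r|exact H2].
Qed.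

Lemma meet_imp_leA a b : leA (meet a (imp a b)) b.
Proof.
  pose proof (proj2 (imp_res A a b (imp a b)) (meet_idem _)) as H.
  unfold leA. rewrite (meetC A a (imp a b)). exact H.
Qed.

Lemma leA_imp a b c : leA (meet c a) b -> leA c (imp a b).
Proof. apply (imp_res A a b c). Qed.

Lemma leA_join_coimp a b : leA a (join b (coimp a b)).
Proof. apply (proj1 (coimp_res A a b (coimp a b))). apply meet_idem. Qed.

Lemma coimp_leA a b c : leA a (join b c) -> leA (coimp a b) c.
Proof. apply (coimp_res A a b c). Qed.

Lemma leA_join_meet g a b : leA g (join a b) -> leA g (join (meet g a) (meet g b)).
Proof. unfold leA; intros H. rewrite <- distr, H, meet_idem. reflexivity. Qed.

End Lattice.

Notation mem P a := (proj1_sig P a).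

Section Points.
Context {A : biHeyting}.
Implicit Types a b c : A.
Implicit Types P Q : pt A.

Lemma pt_ext P Q : (forall a, mem P a <-> mem Q a) -> P = Q.
Proof.
  destruct P as [F HF], Q as [G HG]; simpl; intros H.
  assert (F = G) as <-.
  { apply functional_extensionality; intro a. apply propositional_extensionality, H. }
  f_equal. apply proof_irrelevance.
Qed.

Lemma mem_top P : mem P top.
Proof. destruct P as [F HF]; exact (proj1 HF). Qed.

Lemma mem_bot P : ~ mem P bot.
Proof. destruct P as [F HF]; exact (proj1 (proj2 HF)). Qed.

Lemma mem_up P a b : leA a b -> mem P a -> mem P b.
Proof. destruct P as [F HF]; exact (proj1 (proj2 (proj2 HF)) a b). Qed.

Lemma mem_meet P a b : mem P (meet a b) <-> mem P a /\ mem P b.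
Proof.
  split.
  - intro H; split; [apply (mem_up P (meet a b)); [apply meet_leA_l|exact H]|].
    apply (mem_up P (meet a b)); [apply meet_leA_r|exact H].
  - destruct P as [F HF]; intros [H1 H2]. exact (proj1 (proj2 (proj2 (proj2 HF))) a b H1 H2).
Qed.

Lemma mem_join P a b : mem P (join a b) <-> mem P a \/ mem P b.
Proof.
  split.
  - destruct P as [F HF]; exact (proj2 (proj2 (proj2 (proj2 HF))) a b).
  - intros [H|H]; [apply (mem_up P a)|apply (mem_up P b)]; auto using join_leA_l, join_leA_r.
Qed.

Lemma mem_imp_mp P a b : mem P (imp a b) -> mem P a -> mem P b.
Proof.
  intros H1 H2. apply (mem_up P _ _ (meet_imp_leA a b)). apply mem_meet; split; auto.
Qed.

Lemma ptle_refl P : ptle P P.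
Proof. intros a H; exact H. Qed.

Lemma ptle_trans P Q R : ptle P Q -> ptle Q R -> ptle P R.
Proof. unfold ptle; auto. Qed.

Lemma ptle_antisym P Q : ptle P Q -> ptle Q P -> P = Q.
Proof. intros; apply pt_ext; split; auto. Qed.

Lemma ptlt_le P Q : ptlt P Q -> ptle P Q.
Proof. intros [H _]; exact H. Qed.

Lemma ptlt_not_ge P Q : ptlt P Q -> ~ ptle Q P.
Proof. intros [H1 H2] H3. apply H2, ptle_antisym; auto. Qed.

Lemma ptlt_le_trans P Q R : ptlt P Q -> ptle Q R -> ptlt P R.
Proof.
  intros [H1 H2] H3. split; [eapply ptle_trans; eauto|].
  intros ->. apply H2, ptle_antisym; auto.
Qed.

Lemma ptle_lt_trans P Q R : ptle P Q -> ptlt Q R -> ptlt P R.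
Proof.
  intros H1 [H2 H3]. split; [eapply ptle_trans; eauto|].
  intros ->. apply H3, ptle_antisym; auto.
Qed.

Lemma ptlt_sep P Q : ptlt P Q -> exists c, mem Q c /\ ~ mem P c.
Proof.
  intros [H1 H2]. apply NNPP; intro H. apply H2, ptle_antisym; auto.
  intros c Hc. apply NNPP; intro Hc'. apply H; eauto.
Qed.

Lemma mem_imp_up P Q a b : mem P (imp a b) -> ptle P Q -> mem Q a -> mem Q b.
Proof. intros H1 H2 H3. eapply mem_imp_mp; eauto. Qed.

Lemma mem_coimp_of_below P Q a b : ptle Q P -> mem Q a -> ~ mem Q b -> mem P (coimp a b).
Proof.
  intros H1 H2 H3. apply H1.
  assert (H : mem Q (join b (coimp a b))) by (apply (mem_up Q a), H2; apply leA_join_coimp).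
  apply mem_join in H. tauto.
Qed.

Lemma chain_meet_pt (T : pt A -> Prop) w0 : T w0 ->
  (forall s s', T s -> T s' -> ptle s s' \/ ptle s' s) ->
  exists P, forall a, mem P a <-> forall s, T s -> mem s a.
Proof.
  intros Hw0 Hch.
  set (F := fun a => forall s, T s -> mem s a).
  assert (Hpf : prime_filter F).
  { split; [intros s _; apply mem_top|]. split; [intros H; exact (mem_bot _ (H w0 Hw0))|].
    split; [intros a b Hab H s Hs; eapply mem_up; eauto|].
    split; [intros a b Ha Hb s Hs; apply mem_meet; split; auto|].
    intros a b Hab. apply NNPP; intros [Ha Hb]%not_or_and.
    apply not_all_ex_not in Ha as [s Hs]. apply not_all_ex_not in Hb as [s' Hs'].
    apply imply_to_and in Hs as [Hs Hsa]. apply imply_to_and in Hs' as [Hs' Hsb].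
    destruct (Hch s s' Hs Hs') as [H|H].
    - destruct (proj1 (mem_join _ _ _) (Hab s Hs)); auto.
    - destruct (proj1 (mem_join _ _ _) (Hab s' Hs')); auto. }
  exists (exist _ F Hpf). reflexivity.
Qed.

Lemma chain_join_pt (T : pt A -> Prop) w0 : T w0 ->
  (forall s s', T s -> T s' -> ptle s s' \/ ptle s' s) ->
  exists P, forall a, mem P a <-> exists s, T s /\ mem s a.
Proof.
  intros Hw0 Hch.
  set (F := fun a => exists s, T s /\ mem s a).
  assert (Hpf : prime_filter F).
  { split; [exists w0; split; auto; apply mem_top|].
    split; [intros [s [_ H]]; exact (mem_bot _ H)|].
    split; [intros a b Hab [s [Hs H]]; exists s; split; auto; eapply mem_up; eauto|].
    split.
    - intros a b [s [Hs Ha]] [s' [Hs' Hb]].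
      destruct (Hch s s' Hs Hs') as [H|H]; [exists s'|exists s]; split; auto; apply mem_meet; auto.
    - intros a b [s [Hs H]]. apply mem_join in H as [H|H]; [left|right]; exists s; auto. }
  exists (exist _ F Hpf). reflexivity.
Qed.

Definition agree (es : list A) P Q := forall e, In e es -> (mem P e <-> mem Q e).

Definition bmem P a : bool := if excluded_middle_informative (mem P a) then true else false.

Lemma bmem_true P a : bmem P a = true <-> mem P a.
Proof. unfold bmem. destruct excluded_middle_informative; intuition discriminate. Qed.

Lemma bmem_false P a : bmem P a = false <-> ~ mem P a.
Proof. unfold bmem. destruct excluded_middle_informative; intuition discriminate. Qed.

Lemma bmem_eq P Q a : (mem P a <-> mem Q a) -> bmem P a = bmem Q a.
Proof.
  intros H. unfold bmem.
  destruct (excluded_middle_informative (mem P a)), (excluded_middle_informative (mem Q a)); tauto.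
Qed.

(* Preimages are unions of the basic clopens fixing the membership pattern on [es]. *)
Lemma continuous_of_agree {Y : Type} (f : pt A -> Y) es :
  (forall P Q, agree es P Q -> f P = f Q) -> continuous_to f.
Proof.
  intros H S P HP. exists (map (fun e => (e, bmem P e)) es). split.
  - intros ab (e & <- & He)%in_map_iff. simpl.
    split; intros K; [apply bmem_true|apply bmem_false]; auto.
  - intros Q HQ. replace (f Q) with (f P); auto. apply H. intros e He.
    pose proof (HQ (e, bmem P e) (in_map (fun e => (e, bmem P e)) es e He)) as K. simpl in K.
    destruct (bmem P e) eqn:E.
    + apply bmem_true in E. split; auto. intros; apply K; auto.
    + apply bmem_false in E. split; intros; [contradiction|]. exfalso; apply K; auto.
Qed.

End Points.

Section Eventually.
Context {T : Type} (D : T -> Prop) (le : T -> T -> Prop).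

Definition eventually (P : T -> Prop) : Prop :=
  exists w, D w /\ forall v, D v -> le w v -> P v.

Lemma eventually_mono (P Q : T -> Prop) :
  (forall v, D v -> P v -> Q v) -> eventually P -> eventually Q.
Proof. intros H [w [Hw HP]]. exists w. split; auto. Qed.

Lemma eventually_decided (Occ : T -> Prop) w0 :
  D w0 -> (forall v v', le v v' -> Occ v' -> Occ v) ->
  eventually (fun v => Occ v -> forall w, D w -> Occ w).
Proof.
  intros Hw0 Hanti. destruct (classic (forall w, D w -> Occ w)) as [H|H].
  - exists w0. split; auto.
  - apply not_all_ex_not in H as [wp Hwp]. apply imply_to_and in Hwp as [Hwp Hn].
    exists wp. split; auto. intros v _ Hv Hocc. exfalso. eauto.
Qed.

Hypothesis le_transitive : forall u v w, le u v -> le v w -> le u w.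
Hypothesis directed : forall u v, D u -> D v -> exists w, D w /\ le u w /\ le v w.

Lemma eventually_and (P Q : T -> Prop) :
  eventually P -> eventually Q -> eventually (fun v => P v /\ Q v).
Proof.
  intros [w1 [Hw1 H1]] [w2 [Hw2 H2]]. destruct (directed w1 w2 Hw1 Hw2) as [w [Hw [K1 K2]]].
  exists w. split; auto. intros v Hv Hwv. split; [apply H1|apply H2]; eauto.
Qed.

Lemma eventually_forall_list {I : Type} (l : list I) (P : I -> T -> Prop) w0 : D w0 ->
  (forall i, In i l -> eventually (P i)) -> eventually (fun v => forall i, In i l -> P i v).
Proof.
  intros Hw0. induction l as [|i l IH]; intros H.
  - exists w0. split; auto. intros v _ _ i [].
  - apply (eventually_mono (fun v => P i v /\ forall j, In j l -> P j v)).
    + intros v _ [K1 K2] j [<-|Hj]; auto.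
    + apply eventually_and; [apply H; left; auto|apply IH; intros j Hj; apply H; right; auto].
Qed.

End Eventually.

Fixpoint bool_lists (k : nat) : list (list bool) :=
  match k with
  | 0 => [[]]
  | S k' => map (cons true) (bool_lists k') ++ map (cons false) (bool_lists k')
  end.

Lemma in_bool_lists l : In l (bool_lists (length l)).
Proof.
  induction l as [|b l IH]; simpl; auto.
  apply in_or_app. destruct b; [left|right]; apply in_map; auto.
Qed.

Lemma length_bool_lists k : length (bool_lists k) = 2 ^ k.
Proof. induction k; simpl; auto. rewrite length_app, !length_map, IHk. lia. Qed.

Lemma at_most_of_code {T : Type} (S : T -> Prop) (code : T -> list bool) k :
  (forall t, S t -> length (code t) = k) ->
  (forall t t', S t -> S t' -> code t = code t' -> t = t') -> at_most (2 ^ k) S.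
Proof.
  intros Hlen Hinj.
  assert (Hcover : forall L : list (list bool), exists l, length l <= length L /\
            forall t, S t -> In (code t) L -> In t l).
  { induction L as [|v L [l [Hl Hcov]]]; [exists []; split; auto; intros t _ []|].
    destruct (classic (exists t, S t /\ code t = v)) as [[t0 [Ht0 Hv]]|Hno].
    - exists (t0 :: l). split; [simpl; lia|].
      intros t Ht [E|HL]; [left; apply Hinj; congruence|right; auto].
    - exists l. split; [simpl; lia|].
      intros t Ht [E|HL]; [exfalso; eauto|auto]. }
  destruct (Hcover (bool_lists k)) as [l [Hl Hcov]].
  exists l. rewrite length_bool_lists in Hl. split; auto.
  intros t Ht. apply Hcov; auto. rewrite <- (Hlen t Ht). apply in_bool_lists.
Qed.

Section PrimeFilterTheorem.
Context {A : biHeyting} (gens : list A) (Hgen : generated_by gens).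
Implicit Types a b c : A.

Lemma generated_ind (S : A -> Prop) :
  S bot -> S top ->
  (forall a b, S a -> S b -> S (meet a b)) ->
  (forall a b, S a -> S b -> S (join a b)) ->
  (forall a b, S a -> S b -> S (imp a b)) ->
  (forall a b, S a -> S b -> S (coimp a b)) ->
  (forall g, In g gens -> S g) -> forall a, S a.
Proof. intros Hb Ht Hm Hj Hi Hc. apply Hgen. repeat split; auto. Qed.

(* A finitely generated algebra is countable: [terms d] lists the values of
   the terms of depth at most [d]; this replaces Zorn's lemma below. *)
Definition terms_step (l : list A) : list A :=
  flat_map (fun a => flat_map (fun b => [meet a b; join a b; imp a b; coimp a b]) l) l.

Fixpoint terms (d : nat) : list A :=
  match d with 0 => bot :: top :: gens | S d' => terms d' ++ terms_step (terms d') end.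

Definition enum (k : nat) : A := nth k (terms k) bot.

Lemma terms_prefix d1 d2 : d1 <= d2 -> exists t, terms d2 = terms d1 ++ t.
Proof.
  induction 1 as [|d2 _ [t Ht]]; [exists []; rewrite app_nil_r; auto|].
  exists (t ++ terms_step (terms d2)). simpl. rewrite Ht, app_assoc. auto.
Qed.

Lemma terms_length d : d < length (terms d).
Proof.
  induction d; simpl; [lia|]. rewrite length_app.
  destruct (terms d) as [|a l]; simpl in *; [lia|]. unfold terms_step. simpl. lia.
Qed.

Lemma terms_exhaust a : exists d, In a (terms d).
Proof.
  assert (Hmono : forall x d1 d2, d1 <= d2 -> In x (terms d1) -> In x (terms d2)).
  { intros x d1 d2 H1 H2. destruct (terms_prefix _ _ H1) as [t ->]. apply in_or_app; auto. }
  assert (Hstep : forall x y d, In x (terms d) -> In y (terms d) ->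
     forall z, In z [meet x y; join x y; imp x y; coimp x y] -> exists d', In z (terms d')).
  { intros x y d Hx Hy z Hz. exists (S d). simpl. apply in_or_app. right.
    apply in_flat_map. exists x. split; auto. apply in_flat_map. exists y. auto. }
  assert (Hbin : forall x y, (exists d, In x (terms d)) -> (exists d, In y (terms d)) ->
     forall z, In z [meet x y; join x y; imp x y; coimp x y] -> exists d', In z (terms d')).
  { intros x y [d1 H1] [d2 H2].
    apply (Hstep x y (max d1 d2)); [apply (Hmono x d1)|apply (Hmono y d2)]; auto; lia. }
  revert a. apply (generated_ind (fun a => exists d, In a (terms d)));
    try (intros x y Hx Hy; apply (Hbin x y Hx Hy); simpl; tauto).
  - exists 0. simpl; auto.
  - exists 0. simpl; auto.
  - intros g Hg. exists 0. simpl; auto.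
Qed.

Lemma enum_surj a : exists k, enum k = a.
Proof.
  destruct (terms_exhaust a) as [d Hd]. destruct (In_nth _ _ bot Hd) as [i [Hi Hn]].
  exists i. unfold enum. destruct (le_lt_dec d i) as [Hdi|Hid].
  - destruct (terms_prefix _ _ Hdi) as [t ->]. rewrite app_nth1; auto.
  - destruct (terms_prefix i d ltac:(lia)) as [t Ht].
    rewrite Ht, app_nth1 in Hn; auto. apply terms_length.
Qed.

Definition is_filter (F : A -> Prop) :=
  F top /\ (forall a b, leA a b -> F a -> F b) /\ (forall a b, F a -> F b -> F (meet a b)).

Definition is_ideal (I : A -> Prop) :=
  I bot /\ (forall a b, leA a b -> I b -> I a) /\ (forall a b, I a -> I b -> I (join a b)).

Definition gen_filter (G : A -> Prop) (e : A) : A -> Prop :=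
  fun z => exists f, G f /\ leA (meet f e) z.

Lemma gen_filter_is_filter G e : is_filter G -> is_filter (gen_filter G e).
Proof.
  intros [H1 [H2 H3]]. split; [|split].
  - exists top. split; auto. apply leA_top.
  - intros a b Hab [f [Hf Hle]]. exists f; split; auto. eapply leA_trans; eauto.
  - intros a b [f [Hf Hf']] [g [Hg Hg']]. exists (meet f g). split; auto.
    apply leA_meet; [eapply leA_trans; [|exact Hf']|eapply leA_trans; [|exact Hg']];
      apply meet_leA_mono; auto using meet_leA_l, meet_leA_r, leA_refl.
Qed.

Lemma gen_filter_incl G e z : is_filter G -> G z -> gen_filter G e z.
Proof. intros HG Hz. exists z. split; auto. apply meet_leA_l. Qed.

Lemma principal_filter a : is_filter (fun z => leA a z).
Proof.
  split; [apply leA_top|split]; [intros x y Hxy Hx; eapply leA_trans; eauto|].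
  intros x y Hx Hy. apply leA_meet; auto.
Qed.

Lemma principal_ideal b : is_ideal (fun z => leA z b).
Proof.
  split; [apply bot_leA|split]; [intros x y Hxy Hy; eapply leA_trans; eauto|].
  intros x y Hx Hy. apply leA_join; auto.
Qed.

Lemma pt_filter (P : pt A) : is_filter (fun a => mem P a).
Proof.
  split; [apply mem_top|split]; [intros; eapply mem_up; eauto|].
  intros a b Ha Hb. apply mem_meet; auto.
Qed.

Section Extension.
Variables F I : A -> Prop.
Hypothesis HF : is_filter F.
Hypothesis HI : is_ideal I.
Hypothesis Hdis : forall a, F a -> ~ I a.

Fixpoint ext (k : nat) : A -> Prop :=
  match k with
  | 0 => F
  | S k' => if excluded_middle_informative (forall z, gen_filter (ext k') (enum k') z -> ~ I z)
            then gen_filter (ext k') (enum k') else ext k'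
  end.

Lemma ext_filter k : is_filter (ext k) /\ forall a, ext k a -> ~ I a.
Proof.
  induction k as [|k [IH1 IH2]]; simpl; auto.
  destruct excluded_middle_informative; auto. split; auto. apply gen_filter_is_filter; auto.
Qed.

Lemma ext_mono k1 k2 a : k1 <= k2 -> ext k1 a -> ext k2 a.
Proof.
  intros Hk Ha. induction Hk as [|k2 _ IH]; auto.
  simpl. destruct excluded_middle_informative; auto.
  apply gen_filter_incl; auto. apply ext_filter.
Qed.

Definition ext_union a := exists k, ext k a.

Lemma ext_union_filter : is_filter ext_union.
Proof.
  split; [exists 0; apply HF|split].
  - intros a b H [k Hk]. exists k. eapply (proj1 (ext_filter k)); eauto.
  - intros a b [k1 H1] [k2 H2]. exists (max k1 k2).
    apply (proj1 (ext_filter _)); [apply (ext_mono k1)|apply (ext_mono k2)]; auto; lia.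
Qed.

Lemma ext_union_disjoint a : ext_union a -> ~ I a.
Proof. intros [k Hk]. eapply (proj2 (ext_filter k)); eauto. Qed.

Lemma ext_union_maximal a : ~ ext_union a -> exists f, ext_union f /\ I (meet f a).
Proof.
  intros Ha. destruct (enum_surj a) as [k <-].
  destruct (excluded_middle_informative
             (forall z, gen_filter (ext k) (enum k) z -> ~ I z)) as [Hc|Hc].
  - exfalso. apply Ha. exists (S k). simpl.
    destruct excluded_middle_informative as [_|]; [|contradiction].
    exists top. split; [apply ext_filter|apply meet_leA_r].
  - apply not_all_ex_not in Hc as [z Hz]. apply imply_to_and in Hz as [[f [Hf Hle]] Hz].
    apply NNPP in Hz. exists f. split; [exists k; auto|]. eapply (proj1 (proj2 HI)); eauto.
Qed.

Lemma ext_union_prime : prime_filter ext_union.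
Proof.
  destruct ext_union_filter as [Htop [Hup Hmeet]].
  split; auto. split; [intro H; apply (ext_union_disjoint bot); auto; apply HI|].
  split; auto. split; auto.
  intros a b Hab. apply NNPP; intros [Ha Hb]%not_or_and.
  destruct (ext_union_maximal a Ha) as [f [Hf HfI]].
  destruct (ext_union_maximal b Hb) as [g [Hg HgI]].
  apply (ext_union_disjoint (meet (meet f g) (join a b))); [apply Hmeet; auto|].
  (* (f /\ g) /\ (a \/ b) <= (f /\ a) \/ (g /\ b) *)
  apply (proj1 (proj2 HI)) with (b := join (meet f a) (meet g b)); [|apply HI; auto].
  eapply leA_trans; [apply leA_join_meet, meet_leA_r|].
  apply leA_join; [eapply leA_trans; [|apply join_leA_l]|eapply leA_trans; [|apply join_leA_r]];
    apply meet_leA_mono; try apply leA_refl; eapply leA_trans; apply meet_leA_l || apply meet_leA_r.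
Qed.

End Extension.

Lemma prime_filter_theorem (F I : A -> Prop) :
  is_filter F -> is_ideal I -> (forall a, F a -> ~ I a) ->
  exists P : pt A, (forall a, F a -> mem P a) /\ (forall a, I a -> ~ mem P a).
Proof.
  intros HF HI Hdis. exists (exist _ _ (ext_union_prime F I HF HI Hdis)). simpl. split.
  - intros a Ha. exists 0; auto.
  - intros a Ha HQ. eapply ext_union_disjoint; eauto.
Qed.

Lemma mem_imp P a b :
  mem P (imp a b) <-> forall Q : pt A, ptle P Q -> mem Q a -> mem Q b.
Proof.
  split; [intros; eapply mem_imp_up; eauto|]. intros H. apply NNPP; intro Hn.
  destruct (prime_filter_theorem (gen_filter (fun p => mem P p) a) (fun z => leA z b))
    as [Q [HQ1 HQ2]].
  - apply gen_filter_is_filter, pt_filter.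
  - apply principal_ideal.
  - intros z [p [Hp Hle]] Hz. apply Hn. eapply mem_up; [|exact Hp].
    apply leA_imp. eapply leA_trans; eauto.
  - apply (HQ2 b (leA_refl b)), (H Q).
    + intros x Hx. apply HQ1, gen_filter_incl; auto. apply pt_filter.
    + apply HQ1. exists top. split; [apply mem_top|apply meet_leA_r].
Qed.

Lemma mem_coimp P a b :
  mem P (coimp a b) <-> exists Q : pt A, ptle Q P /\ mem Q a /\ ~ mem Q b.
Proof.
  split; [|intros [Q [H1 [H2 H3]]]; eapply mem_coimp_of_below; eauto]. intros H.
  destruct (prime_filter_theorem (fun z => leA a z)
              (fun z => exists c, ~ mem P c /\ leA z (join b c))) as [Q [HQ1 HQ2]].
  - apply principal_filter.
  - split; [exists bot; split; [apply mem_bot|apply bot_leA]|split].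
    + intros x y Hxy [c [Hc Hle]]. exists c. split; auto. eapply leA_trans; eauto.
    + intros x y [c [Hc Hc']] [d [Hd Hd']]. exists (join c d). split.
      * intros [|]%mem_join; tauto.
      * apply leA_join.
        -- eapply leA_trans; [exact Hc'|]. apply leA_join; [apply join_leA_l|].
           eapply leA_trans; [apply join_leA_l|apply join_leA_r].
        -- eapply leA_trans; [exact Hd'|]. apply leA_join; [apply join_leA_l|].
           eapply leA_trans; [apply join_leA_r|apply join_leA_r].
  - intros z Hz [c [Hc Hle]]. apply Hc. eapply mem_up; [|exact H].
    apply coimp_leA. eapply leA_trans; eauto.
  - exists Q. split; [|split].
    + intros x Hx. apply NNPP; intro Hn. apply (HQ2 x); auto.
      exists x. split; auto. apply join_leA_r.
    + apply HQ1, leA_refl.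
    + intro Hb. apply (HQ2 b); auto. exists bot. split; [apply mem_bot|apply join_leA_l].
Qed.

Lemma points_separate a b : a <> b -> exists P : pt A, ~ (mem P a <-> mem P b).
Proof.
  intros Hab.
  assert (K : forall x y, ~ leA x y -> exists P : pt A, mem P x /\ ~ mem P y).
  { intros x y Hxy.
    destruct (prime_filter_theorem (fun z => leA x z) (fun z => leA z y)) as [Q [HQ1 HQ2]];
      auto using principal_filter, principal_ideal.
    - intros z H1 H2. apply Hxy. eapply leA_trans; eauto.
    - exists Q. split; [apply HQ1, leA_refl|apply HQ2, leA_refl]. }
  destruct (classic (leA a b)) as [H1|H1]; [destruct (classic (leA b a)) as [H2|H2]|].
  - exfalso; apply Hab, leA_antisym; auto.
  - destruct (K _ _ H2) as [P HP]. exists P. tauto.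
  - destruct (K _ _ H1) as [P HP]. exists P. tauto.
Qed.

End PrimeFilterTheorem.

Section CoTree.
Context {A : biHeyting} (gens : list A) (Hgen : generated_by gens) (r m : pt A)
  (HLC : validates_biLC A) (Hr : greatest_pt r) (Hm : minimal_pt m)
  (Hcov : forall x, ptlt m x \/ minimal_pt x)
  (Hatt : forall y, minimal_pt y -> y <> m ->
     exists z, immpred y z /\ ptlt m z /\ forall w, immpred y w -> w = z).

Implicit Types P Q R : pt A.
Implicit Types a b c : A.

Definition in_chain P := ptle m P.

Definition leaf y := minimal_pt y /\ y <> m.

Definition attached y z := leaf y /\ immpred y z.

Definition profile P : list bool := map (fun g => bmem P g) gens.

(* Prelinearity [(a -> b) \/ (b -> a) = top], read in the prime filter [R]. *)
Lemma ptle_total_above R P Q : ptle R P -> ptle R Q -> ptle P Q \/ ptle Q P.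
Proof.
  intros HP HQ. destruct (classic (ptle P Q)) as [H|H]; auto. right.
  apply not_all_ex_not in H as [a Ha]. apply imply_to_and in Ha as [Ha Ha'].
  intros b Hb. apply NNPP; intro Hb'.
  assert (Ht : mem R (join (imp a b) (imp b a))) by (rewrite (HLC a b); apply mem_top).
  apply mem_join in Ht as [Ht|Ht].
  - apply Hb'. eapply mem_imp_up; eauto.
  - apply Ha'. eapply mem_imp_up; eauto.
Qed.

Lemma chain_total P Q : in_chain P -> in_chain Q -> ptle P Q \/ ptle Q P.
Proof. apply ptle_total_above. Qed.

Lemma chain_lt_or_ge P Q : in_chain P -> in_chain Q -> ptlt P Q \/ ptle Q P.
Proof.
  intros HP HQ. destruct (chain_total P Q HP HQ) as [H|H]; auto.
  destruct (classic (P = Q)) as [->|Hn]; [right; apply ptle_refl|left; split; auto].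
Qed.

Lemma in_chain_up P Q : in_chain P -> ptle P Q -> in_chain Q.
Proof. apply ptle_trans. Qed.

Lemma chain_or_leaf P : in_chain P \/ leaf P.
Proof.
  destruct (Hcov P) as [[H _]|H]; [left; exact H|].
  destruct (classic (P = m)) as [->|Hn]; [left; apply ptle_refl|right; split; auto].
Qed.

Lemma leaf_not_chain y : leaf y -> ~ in_chain y.
Proof. intros [H1 H2] H. apply H2. symmetry. apply H1, H. Qed.

Lemma not_minimal_chain P : ~ minimal_pt P -> in_chain P.
Proof. intros H. destruct (chain_or_leaf P) as [|[]]; tauto. Qed.

Lemma attached_ex y : leaf y -> exists z, attached y z.
Proof.
  intros Hy. destruct (Hatt y (proj1 Hy) (proj2 Hy)) as [z [Hz _]]. exists z. split; auto.
Qed.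

Lemma attached_above_m y z : attached y z -> ptlt m z.
Proof.
  intros [[H1 H2] H3]. destruct (Hatt y H1 H2) as [z0 [_ [Hmz Hu]]].
  rewrite (Hu z H3). exact Hmz.
Qed.

Lemma attached_chain y z : attached y z -> in_chain z.
Proof. intros Hy. apply ptlt_le, (attached_above_m y z Hy). Qed.

Lemma attached_le y z : attached y z -> ptle y z.
Proof. intros [_ [[H _] _]]. exact H. Qed.

Lemma above_attached y z Q : attached y z -> ptle y Q -> Q = y \/ ptle z Q.
Proof.
  intros Hyz HyQ.
  destruct (ptle_total_above y z Q (attached_le _ _ Hyz) HyQ) as [H|H]; [right; exact H|].
  destruct (classic (Q = z)) as [->|Hqz]; [right; apply ptle_refl|].
  destruct (classic (Q = y)) as [->|Hqy]; [left; auto|].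
  exfalso. destruct Hyz as [_ [_ Hno]]. apply Hno. exists Q. repeat split; auto.
Qed.

Lemma below_chain Q P : ptle Q P -> in_chain P ->
  in_chain Q \/ exists zQ, attached Q zQ /\ ptle zQ P.
Proof.
  intros HQP HP. destruct (chain_or_leaf Q) as [H|H]; [left; exact H|right].
  destruct (attached_ex Q H) as [zQ HzQ]. exists zQ. split; auto.
  destruct (above_attached Q zQ P HzQ HQP) as [->|E]; auto.
  exfalso. eapply leaf_not_chain; eauto.
Qed.

Lemma mem_coimp_minimal P a b : minimal_pt P -> (mem P (coimp a b) <-> mem P a /\ ~ mem P b).
Proof.
  intros Hmin. rewrite (mem_coimp gens Hgen). split.
  - intros [Q [H1 H2]]. rewrite (Hmin Q H1) in H2. exact H2.
  - intros [H1 H2]. exists P. split; auto. apply ptle_refl.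
Qed.

Lemma mem_imp_attached y z a b : attached y z ->
  (mem y (imp a b) <-> (mem y a -> mem y b) /\ forall Q, ptle z Q -> mem Q a -> mem Q b).
Proof.
  intros Hyz. rewrite (mem_imp gens Hgen). split.
  - intros H. split; [apply H, ptle_refl|]. intros Q HQ. apply H.
    eapply ptle_trans; [apply attached_le; eauto|exact HQ].
  - intros [H1 H2] Q HQ. destruct (above_attached y z Q Hyz HQ) as [->|H]; auto.
Qed.

(* [coimp top c] holds at every point above a point missing [c]: at all chain points when
   [m] misses [c], but at no leaf containing [c]. *)
Definition cut c := meet c (coimp top c).

Lemma mem_cut c P : ~ mem m c -> (mem P (cut c) <-> in_chain P /\ mem P c).
Proof.
  intros Hc. unfold cut. rewrite mem_meet. split.
  - intros [H1 H2]. split; auto. destruct (chain_or_leaf P) as [|[Hmin _]]; auto.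
    apply mem_coimp_minimal in H2; tauto.
  - intros [H1 H2]. split; auto. eapply mem_coimp_of_below; eauto. apply mem_top.
Qed.

Lemma immpred_chain_le z x P : immpred z x -> in_chain z -> in_chain P -> ptlt P x -> ptle P z.
Proof.
  intros Hzx HzC HPC HPx. destruct (chain_lt_or_ge z P HzC HPC) as [K|K]; auto.
  exfalso. apply (proj2 Hzx). exists P. auto.
Qed.

Lemma immpred_chain_ge z x P : immpred z x -> in_chain z -> in_chain P -> ptlt z P -> ptle x P.
Proof.
  intros Hzx HzC HPC HzP.
  destruct (chain_lt_or_ge P x HPC (in_chain_up _ _ HzC (ptlt_le _ _ (proj1 Hzx)))) as [K|K]; auto.
  exfalso. apply (ptlt_not_ge _ _ HzP), (immpred_chain_le z x P); auto.
Qed.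

Lemma profile_mem P Q : profile P = profile Q -> forall g, In g gens -> (mem P g <-> mem Q g).
Proof.
  intros H g Hg. rewrite <- (bmem_true P g), <- (bmem_true Q g).
  rewrite (proj1 map_ext_in_iff H g Hg). reflexivity.
Qed.

Lemma profile_in_bool_lists P : In (profile P) (bool_lists (length gens)).
Proof. rewrite <- (length_map (fun g => bmem P g) gens). apply in_bool_lists. Qed.

(* A leaf sees implications only through itself and the points above its attachment point. *)
Lemma attached_profile_inj y y' z :
  attached y z -> attached y' z -> profile y = profile y' -> y = y'.
Proof.
  intros H1 H2 Hp. apply pt_ext.
  apply (generated_ind gens Hgen (fun a => mem y a <-> mem y' a)).
  - split; intros Hb; exfalso; exact (mem_bot _ Hb).
  - split; intros; apply mem_top.
  - intros a b Ha Hb. rewrite !mem_meet. tauto.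
  - intros a b Ha Hb. rewrite !mem_join. tauto.
  - intros a b Ha Hb. rewrite (mem_imp_attached y z a b H1), (mem_imp_attached y' z a b H2). tauto.
  - intros a b Ha Hb.
    rewrite (mem_coimp_minimal y a b (proj1 (proj1 H1))).
    rewrite (mem_coimp_minimal y' a b (proj1 (proj1 H2))).
    tauto.
  - apply profile_mem, Hp.
Qed.

Lemma attached_at_most z : at_most (2 ^ length gens) (fun y => attached y z).
Proof.
  apply (at_most_of_code _ profile).
  - intros t _. apply length_map.
  - intros y y' H1 H2. apply (attached_profile_inj y y' z H1 H2).
Qed.

(* Induction on terms shows that every element is constant on [R] and agrees on leaves
   attached in [R] with equal profiles; hence [R] has at most one point. *)
Section Band.
Variable R : pt A -> Prop.
Hypothesis band_chain : forall w, R w -> in_chain w.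
Hypothesis band_convex : forall w1 w2 Q, R w1 -> R w2 -> ptle w1 Q -> ptle Q w2 -> R Q.
Hypothesis band_gens : forall w w' g, R w -> R w' -> In g gens -> (mem w g <-> mem w' g).
Hypothesis band_recur : forall y zy w, attached y zy -> R zy -> R w ->
  exists y' zy', attached y' zy' /\ R zy' /\ ptle zy' w /\ profile y' = profile y.

Definition band_const a := forall w w', R w -> R w' -> (mem w a <-> mem w' a).

Definition band_leaf_const a := forall y y' zy zy', attached y zy -> attached y' zy' ->
  R zy -> R zy' -> profile y = profile y' -> (mem y a <-> mem y' a).

Lemma band_imp_transfer a b w w' : band_const a -> band_const b -> R w -> R w' ->
  (forall Q, ptle w Q -> mem Q a -> mem Q b) -> forall Q, ptle w' Q -> mem Q a -> mem Q b.
Proof.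
  intros Ha Hb Hw Hw' H Q HQ HQa.
  assert (HQC : in_chain Q) by (eapply in_chain_up; [apply band_chain, Hw'|exact HQ]).
  destruct (chain_lt_or_ge Q w HQC (band_chain _ Hw)) as [K|K]; [|apply H; auto].
  assert (RQ : R Q) by (apply (band_convex w' w); auto using ptlt_le).
  apply (Hb w Q Hw RQ), H, (Ha w Q Hw RQ); auto using ptle_refl.
Qed.

Lemma band_coimp_transfer a b w w' :
  band_const a -> band_leaf_const a -> band_const b -> band_leaf_const b ->
  R w -> R w' -> mem w (coimp a b) -> mem w' (coimp a b).
Proof.
  intros Ha1 Ha2 Hb1 Hb2 Hw Hw' H.
  rewrite (mem_coimp gens Hgen) in H |- *. destruct H as [Q [HQw [HQa HQb]]].
  destruct (below_chain Q w HQw (band_chain _ Hw)) as [HQC|[zQ [HzQ HzQw]]].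
  - destruct (chain_lt_or_ge Q w' HQC (band_chain _ Hw')) as [K|K].
    + exists Q. auto using ptlt_le.
    + assert (RQ : R Q) by (apply (band_convex w' w); auto).
      exists w'. split; [apply ptle_refl|]. rewrite <- (Ha1 Q w'), <- (Hb1 Q w'); auto.
  - destruct (chain_lt_or_ge zQ w' (attached_chain _ _ HzQ) (band_chain _ Hw')) as [K|K].
    + exists Q. split; auto. eapply ptle_trans; [apply attached_le; eauto|apply ptlt_le, K].
    + assert (RzQ : R zQ) by (apply (band_convex w' w); auto).
      destruct (band_recur Q zQ w' HzQ RzQ Hw') as [y' [zy' [H1 [H2 [H3 H4]]]]].
      exists y'. split; [eapply ptle_trans; [apply attached_le; eauto|exact H3]|].
      rewrite <- (Ha2 Q y' zQ zy'), <- (Hb2 Q y' zQ zy'); auto.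
Qed.

Lemma band_invariant a : band_const a /\ band_leaf_const a.
Proof.
  revert a. apply (generated_ind gens Hgen).
  - split; [intros w w' _ _|intros y y' zy zy' _ _ _ _ _];
      split; intros Hb; exfalso; exact (mem_bot _ Hb).
  - split; [intros w w' _ _|intros y y' zy zy' _ _ _ _ _]; split; intros; apply mem_top.
  - intros a b [Ha1 Ha2] [Hb1 Hb2]; split.
    + intros w w' Hw Hw'. rewrite !mem_meet, (Ha1 w w'), (Hb1 w w'); tauto.
    + intros y y' zy zy' Hy Hy' Hzy Hzy' Hp.
      rewrite !mem_meet, (Ha2 y y' zy zy'), (Hb2 y y' zy zy'); tauto.
  - intros a b [Ha1 Ha2] [Hb1 Hb2]; split.
    + intros w w' Hw Hw'. rewrite !mem_join, (Ha1 w w'), (Hb1 w w'); tauto.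
    + intros y y' zy zy' Hy Hy' Hzy Hzy' Hp.
      rewrite !mem_join, (Ha2 y y' zy zy'), (Hb2 y y' zy zy'); tauto.
  - intros a b [Ha1 Ha2] [Hb1 Hb2]; split.
    + intros w w' Hw Hw'. rewrite !(mem_imp gens Hgen).
      split; apply band_imp_transfer; auto.
    + intros y y' zy zy' Hy Hy' Hzy Hzy' Hp.
      rewrite (mem_imp_attached y zy a b Hy), (mem_imp_attached y' zy' a b Hy').
      rewrite (Ha2 y y' zy zy'), (Hb2 y y' zy zy'); auto.
      split; intros [K1 K2]; split; auto.
      * apply (band_imp_transfer a b zy zy'); auto.
      * apply (band_imp_transfer a b zy' zy); auto.
  - intros a b [Ha1 Ha2] [Hb1 Hb2]; split.
    + intros w w' Hw Hw'. split; apply band_coimp_transfer; auto.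
    + intros y y' zy zy' Hy Hy' Hzy Hzy' Hp.
      rewrite (mem_coimp_minimal y a b (proj1 (proj1 Hy))).
      rewrite (mem_coimp_minimal y' a b (proj1 (proj1 Hy'))).
      rewrite (Ha2 y y' zy zy'), (Hb2 y y' zy zy'); auto. tauto.
  - intros g Hg. split.
    + intros w w' Hw Hw'. apply band_gens; auto.
    + intros y y' zy zy' _ _ _ _ Hp. apply profile_mem; auto.
Qed.

Lemma band_subsingleton w w' : R w -> R w' -> w = w'.
Proof. intros Hw Hw'. apply pt_ext. intros a. apply (proj1 (band_invariant a)); auto. Qed.

End Band.

Section DownLimit.
Variable x : pt A.
Hypothesis Hx_chain : in_chain x.
Hypothesis Hx_top : x <> r.
Hypothesis Hx_nosucc : ~ exists z, immpred x z.

Let D := ptlt x.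
Let below (w w' : pt A) := ptle w' w.

Lemma dl_below_r : D r.
Proof. split; [apply Hr|auto]. Qed.

Lemma dl_no_least w : D w -> exists w', D w' /\ ptlt w' w.
Proof. intros Hw. apply NNPP; intro H. apply Hx_nosucc. exists w. split; auto. Qed.

Lemma dl_directed u v : D u -> D v -> exists w, D w /\ below u w /\ below v w.
Proof.
  intros Hu Hv. destruct (ptle_total_above x u v (ptlt_le _ _ Hu) (ptlt_le _ _ Hv)) as [K|K].
  - exists u. split; [exact Hu|split; [apply ptle_refl|exact K]].
  - exists v. split; [exact Hv|split; [exact K|apply ptle_refl]].
Qed.

(* The meet of the points strictly above [x] lies above [x]; having no immediate
   successor, [x] must be this meet. *)
Lemma dl_meet_above a : ~ mem x a -> exists w, D w /\ ~ mem w a.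
Proof.
  intros Ha. apply NNPP; intro H.
  assert (H' : forall w, D w -> mem w a) by (intros w Hw; apply NNPP; eauto).
  destruct (chain_meet_pt D r dl_below_r) as [P HP].
  { intros s s' Hs Hs'. apply (ptle_total_above x); apply ptlt_le; auto. }
  assert (HxP : ptle x P) by (intros b Hb; apply HP; intros s Hs; apply (ptlt_le _ _ Hs), Hb).
  apply Hx_nosucc. exists P. split; [split; auto; intros <-; apply Ha, HP; auto|].
  intros [u [Hu1 Hu2]]. apply (ptlt_not_ge _ _ Hu2). intros b Hb. exact (proj1 (HP b) Hb u Hu1).
Qed.

Lemma dl_eventually_agree a : eventually D below (fun v => mem v a <-> mem x a).
Proof.
  destruct (classic (mem x a)) as [Ha|Ha].
  - exists r. split; [apply dl_below_r|]. intros v Hv _. split; auto. intros _. apply Hv, Ha.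
  - destruct (dl_meet_above a Ha) as [w [Hw Hwa]]. exists w. split; auto.
    intros v _ Hvw. split; [intros K; exfalso; apply Hwa, Hvw, K|tauto].
Qed.

Definition dl_occurs p v := exists y zy, attached y zy /\ D zy /\ ptle zy v /\ profile y = p.

Lemma dl_eventually_stable : eventually D below (fun v =>
  (forall g, In g gens -> (mem v g <-> mem x g)) /\
  (forall p, In p (bool_lists (length gens)) -> dl_occurs p v -> forall w, D w -> dl_occurs p w)).
Proof.
  assert (Htrans : forall u v w, below u v -> below v w -> below u w).
  { intros u v w H1 H2. eapply ptle_trans; eauto. }
  apply eventually_and; auto using dl_directed.
  - apply eventually_forall_list with r; auto using dl_directed, dl_below_r.
    intros g _. apply dl_eventually_agree.
  - apply eventually_forall_list with r; auto using dl_directed, dl_below_r.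
    intros p _. apply eventually_decided with r; [apply dl_below_r|].
    intros v v' Hvv' [y [zy [H1 [H2 [H3 H4]]]]]. exists y, zy.
    split; [|split; [|split]]; auto. eapply ptle_trans; eauto.
Qed.

(* Close enough above [x], the generators agree with [x] and every profile occurring is
   attached arbitrarily close to [x]; the band [(x, z1]] then collapses, yet it has at
   least two points since [x] has no immediate successor. *)
Lemma no_down_limit : False.
Proof.
  destruct dl_eventually_stable as [z1 [Hz1 Hstab]].
  destruct (dl_no_least z1 Hz1) as [w' [Hw' Hw'z1]].
  apply (proj2 Hw'z1), (band_subsingleton (fun w => D w /\ ptle w z1)).
  - intros w [Hw _]. eapply in_chain_up; [exact Hx_chain|apply ptlt_le, Hw].
  - intros w1 w2 Q [H1 _] [_ H2] HQ1 HQ2. split; [eapply ptlt_le_trans|eapply ptle_trans]; eauto.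
  - intros v v' g [Hv Hvz] [Hv' Hv'z] Hg.
    rewrite (proj1 (Hstab v Hv Hvz) g Hg), (proj1 (Hstab v' Hv' Hv'z) g Hg). tauto.
  - intros y zy v Hy [Hzy Hzyz] [Hv Hvz].
    destruct (proj2 (Hstab z1 Hz1 (ptle_refl _)) (profile y) (profile_in_bool_lists y))
      with (w := v) as [y' [zy' [H1 [H2 [H3 H4]]]]]; auto.
    + exists y, zy. auto.
    + exists y', zy'. split; [|split; [split|split]]; auto. eapply ptle_trans; eauto.
  - split; auto. apply ptlt_le, Hw'z1.
  - split; auto. apply ptle_refl.
Qed.

End DownLimit.

Lemma chain_has_succ x : in_chain x -> x <> r -> exists z, immpred x z.
Proof. intros Hx Hxr. apply NNPP. exact (no_down_limit x Hx Hxr). Qed.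

(* The meet of [S] is a chain point; its immediate successor would lie strictly
   between the meet and some member of [S], unless the meet belongs to [S]. *)
Lemma chain_least (S : pt A -> Prop) : (forall x, S x -> in_chain x) -> (exists x, S x) ->
  exists x, S x /\ forall y, S y -> ptle x y.
Proof.
  intros HS [s0 Hs0]. apply NNPP; intro Hnl.
  destruct (chain_meet_pt S s0 Hs0) as [P HP].
  { intros s s' Hs Hs'. apply chain_total; auto. }
  assert (HPs : forall s, S s -> ptle P s) by (intros s Hs a Ha; apply (proj1 (HP a) Ha s Hs)).
  assert (HPS : ~ S P) by (intros H; apply Hnl; exists P; auto).
  assert (HPC : in_chain P) by (intros a Ha; apply HP; intros s Hs; apply HS; auto).
  destruct (chain_has_succ P HPC) as [z [[Hz1 Hz2] Hz3]].
  { intros ->. apply HPS. replace r with s0; auto. apply ptle_antisym; auto. }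
  assert (Hex : exists s, S s /\ ~ ptle z s).
  { apply NNPP; intro H. apply Hz2, ptle_antisym; auto.
    intros a Ha. apply HP. intros s Hs. apply NNPP; intro Hn.
    apply H. exists s. split; auto. }
  destruct Hex as [s [Hs Hzs]].
  destruct (chain_total s z (HS s Hs) (in_chain_up _ _ HPC Hz1)) as [K|K]; [|contradiction].
  apply Hz3. exists s. split; split; auto; intros ->; auto using ptle_refl.
Qed.

Lemma finite_chain_finite_points : finite_set in_chain -> exists l, forall P, In P l.
Proof.
  intros [lC HlC].
  assert (Hleaves : exists l, forall z, In z lC -> forall y, attached y z -> In y l).
  { clear HlC. induction lC as [|z lC [l Hl]]; [exists []; intros z []|].
    destruct (attached_at_most z) as [lz [_ Hlz]].
    exists (lz ++ l). intros z' [<-|Hz'] y Hy; apply in_or_app; [left|right]; eauto. }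
  destruct Hleaves as [l Hl]. exists (lC ++ l). intros P. apply in_or_app.
  destruct (chain_or_leaf P) as [H|H]; [left; auto|right].
  destruct (attached_ex P H) as [z Hz]. apply (Hl z); auto. apply HlC, (attached_chain P), Hz.
Qed.

(* Points separate elements, so finitely many points would make [A] finite. *)
Lemma chain_infinite : infinite_alg A -> ~ finite_set in_chain.
Proof.
  intros Hinf HC. destruct (finite_chain_finite_points HC) as [lX HX]. apply Hinf.
  destruct (at_most_of_code (fun _ => True) (fun a => map (fun P => bmem P a) lX) (length lX))
    as [l [_ Hl]]; [intros; apply length_map| |exists l; auto].
  intros a b _ _ Hab. apply NNPP; intro Hn. destruct (points_separate gens Hgen a b Hn) as [P HP].
  apply HP. rewrite <- (bmem_true P a), <- (bmem_true P b), (proj1 map_ext_in_iff Hab P (HX P)).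
  reflexivity.
Qed.

Section UpLimit.
Variable x : pt A.
Hypothesis Hup : up_limit m x.

Let B w := in_chain w /\ ptlt w x.

Lemma ul_x_chain : in_chain x.
Proof. apply ptlt_le, Hup. Qed.

Lemma ul_B_m : B m.
Proof. split; [apply ptle_refl|apply Hup]. Qed.

Lemma ul_no_max w : B w -> exists w', B w' /\ ptlt w w'.
Proof.
  intros Hw. apply NNPP; intro H. apply (proj2 Hup). exists w. split; [apply Hw|].
  split; [apply Hw|]. intros [u [Hu1 Hu2]]. apply H. exists u.
  split; [split|]; auto. eapply in_chain_up; [apply Hw|apply ptlt_le, Hu1].
Qed.

Lemma ul_directed u v : B u -> B v -> exists w, B w /\ ptle u w /\ ptle v w.
Proof.
  intros Hu Hv. destruct (chain_total u v (proj1 Hu) (proj1 Hv)) as [K|K].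
  - exists v. auto using ptle_refl.
  - exists u. auto using ptle_refl.
Qed.

(* [x] is the join of the chain points below it, as it has no immediate predecessor above [m]. *)
Lemma ul_join_below a : mem x a -> exists w, B w /\ mem w a.
Proof.
  intros Ha. apply NNPP; intro Hn.
  destruct (chain_join_pt B m ul_B_m) as [P HP].
  { intros s s' Hs Hs'. apply chain_total; [apply Hs|apply Hs']. }
  assert (HPx : ptle P x).
  { intros b [s [Hs Hb]]%HP. apply (ptlt_le _ _ (proj2 Hs)), Hb. }
  assert (HPC : in_chain P) by (intros b Hb; apply HP; exists m; split; [apply ul_B_m|auto]).
  apply (proj2 Hup). exists P. split; auto. split.
  - split; auto. intros <-. apply Hn, HP, Ha.
  - intros [u [Hu1 Hu2]]. apply (ptlt_not_ge _ _ Hu1).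
    intros b Hb. apply HP. exists u. split; [split|]; auto.
    eapply in_chain_up; [exact HPC|apply ptlt_le, Hu1].
Qed.

Lemma ul_eventually_agree a : eventually B ptle (fun v => mem v a <-> mem x a).
Proof.
  destruct (classic (mem x a)) as [Ha|Ha].
  - destruct (ul_join_below a Ha) as [w [Hw Hwa]]. exists w. split; auto.
    intros v Hv Hwv. split; [intros K; apply (ptlt_le _ _ (proj2 Hv)), K|intros _; apply Hwv, Hwa].
  - exists m. split; [apply ul_B_m|]. intros v Hv _. split; [|tauto].
    intros K. exact (ptlt_le _ _ (proj2 Hv) a K).
Qed.

Lemma ul_eventually_agree_list (l : list A) :
  eventually B ptle (fun v => forall a, In a l -> (mem v a <-> mem x a)).
Proof.
  apply (eventually_forall_list B ptle ptle_trans ul_directed l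
           (fun a v => mem v a <-> mem x a) m ul_B_m).
  intros a _. apply ul_eventually_agree.
Qed.

(* As [x] has no immediate predecessor in the chain, [[w0, x)] has more than one point. *)
Lemma ul_band_collapse w0 : B w0 ->
  (forall v g, B v -> ptle w0 v -> In g gens -> (mem v g <-> mem x g)) ->
  (forall y zy w, attached y zy -> B zy -> ptle w0 zy -> B w -> ptle w0 w ->
     exists y' zy', attached y' zy' /\ B zy' /\ ptle w0 zy' /\ ptle zy' w /\
                    profile y' = profile y) ->
  False.
Proof.
  intros Hw0 Hgens Hrecur. destruct (ul_no_max w0 Hw0) as [w1 [Hw1 Hw0w1]].
  apply (proj2 Hw0w1), (band_subsingleton (fun v => B v /\ ptle w0 v)).
  - intros v [Hv _]. apply Hv.
  - intros v1 v2 Q [Hv1 Hw0v1] [Hv2 _] HQ1 HQ2. split; [split|].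
    + eapply in_chain_up; [apply Hv1|exact HQ1].
    + eapply ptle_lt_trans; [exact HQ2|apply Hv2].
    + eapply ptle_trans; eauto.
  - intros v v' g [Hv Hw0v] [Hv' Hw0v'] Hg. rewrite (Hgens v g), (Hgens v' g); tauto.
  - intros y zy v Hy [Hzy Hw0zy] [Hv Hw0v].
    destruct (Hrecur y zy v) as [y' [zy' [H1 [H2 [H3 [H4 H5]]]]]]; auto.
    exists y', zy'. auto.
  - split; auto. apply ptle_refl.
  - split; auto. apply ptlt_le, Hw0w1.
Qed.

Lemma ul_attachments_cofinal w : B w -> exists y zy, attached y zy /\ B zy /\ ptle w zy.
Proof.
  intros Hw. destruct (ul_eventually_agree_list gens) as [z [Hz Hstab]].
  destruct (ul_directed w z Hw Hz) as [b [Hb [Hwb Hzb]]].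
  apply NNPP; intro Hno. apply (ul_band_collapse b Hb).
  - intros v g Hv Hbv. apply Hstab; auto. eapply ptle_trans; eauto.
  - intros y zy v Hy Hzy Hbzy _ _. exfalso. apply Hno. exists y, zy.
    split; [|split]; auto. eapply ptle_trans; eauto.
Qed.

Definition ul_occurs p v := exists y zy, attached y zy /\ B zy /\ ptle v zy /\ profile y = p.

Definition cofinal_profile p := forall w, B w -> ul_occurs p w.

(* Otherwise, above some attachment point [zy] close enough to [x], every attached
   profile would be the one of the leaf at [zy], and [[zy, x)] would collapse. *)
Lemma ul_two_cofinal_profiles :
  exists p1 p2, p1 <> p2 /\ cofinal_profile p1 /\ cofinal_profile p2.
Proof.
  assert (Hev : eventually B ptle (fun v =>
    (forall g, In g gens -> (mem v g <-> mem x g)) /\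
    (forall p, In p (bool_lists (length gens)) -> ul_occurs p v -> cofinal_profile p))).
  { apply eventually_and; [exact ptle_trans|exact ul_directed|apply ul_eventually_agree_list|].
    apply (eventually_forall_list B ptle ptle_trans ul_directed (bool_lists (length gens))
             (fun p v => ul_occurs p v -> cofinal_profile p) m ul_B_m).
    intros p _. apply eventually_decided with m; [apply ul_B_m|].
    intros v v' Hvv' [y [zy [H1 [H2 [H3 H4]]]]]. exists y, zy.
    split; [|split; [|split]]; auto. eapply ptle_trans; eauto. }
  destruct Hev as [z1 [Hz1 Hstab]].
  assert (Hcof : forall y zy, attached y zy -> B zy -> ptle z1 zy -> cofinal_profile (profile y)).
  { intros y zy Hy Hzy Hz1zy. apply (proj2 (Hstab z1 Hz1 (ptle_refl _))).
    - apply profile_in_bool_lists.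
    - exists y, zy. auto. }
  apply NNPP; intro Hn.
  assert (Huniq : forall p1 p2, cofinal_profile p1 -> cofinal_profile p2 -> p1 = p2).
  { intros p1 p2 H1 H2. apply NNPP; intro E. apply Hn. exists p1, p2. auto. }
  destruct (ul_attachments_cofinal z1 Hz1) as [y [zy [Hy [Hzy Hz1zy]]]].
  apply (ul_band_collapse zy Hzy).
  - intros v g Hv Hzyv. apply Hstab; auto. eapply ptle_trans; eauto.
  - intros y' zy' v Hy' Hzy' Hzyzy' Hv Hzyv. exists y, zy.
    split; [|split; [|split; [apply ptle_refl|split]]]; auto.
    apply Huniq; [apply (Hcof y zy)|apply (Hcof y' zy')]; auto.
    eapply ptle_trans; eauto.
Qed.

Lemma ul_upset_imp_iff w zy a b : B zy -> ptle w zy ->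
  (forall v, B v -> ptle w v -> (mem v a <-> mem x a) /\ (mem v b <-> mem x b)) ->
  ((forall Q, ptle zy Q -> mem Q a -> mem Q b) <-> (forall Q, ptle x Q -> mem Q a -> mem Q b)).
Proof.
  intros Hzy Hwzy Hagree. split.
  - intros H Q HQ. apply H. eapply ptle_trans; [apply ptlt_le, Hzy|exact HQ].
  - intros H Q HQ. assert (HQC : in_chain Q) by (eapply in_chain_up; [apply Hzy|exact HQ]).
    destruct (chain_lt_or_ge Q x HQC ul_x_chain) as [K|K]; [|apply H; auto].
    destruct (Hagree Q (conj HQC K) (ptle_trans _ _ _ Hwzy HQ)) as [Ea Eb].
    rewrite Ea, Eb. apply H, ptle_refl.
Qed.

(* A cofinal profile is realised by a point attached at [x]: the limit of the attached
   points with that profile. *)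
Section Limit.
Variable p : list bool.
Hypothesis Hcof : cofinal_profile p.

Definition near (Pr : pt A -> Prop) := eventually B ptle (fun w =>
  forall y zy, attached y zy -> B zy -> ptle w zy -> profile y = p -> Pr y).

Lemma near_and (Pr1 Pr2 : pt A -> Prop) : near Pr1 -> near Pr2 -> near (fun y => Pr1 y /\ Pr2 y).
Proof.
  intros H1 H2.
  eapply eventually_mono;
    [|apply eventually_and; [exact ptle_trans|exact ul_directed|exact H1|exact H2]].
  intros w _ [K1 K2] y zy Hy Hzy Hwzy Hp. split; [apply (K1 y zy)|apply (K2 y zy)]; auto.
Qed.

Lemma near_witness (Pr : pt A -> Prop) : near Pr -> exists y zy, attached y zy /\ B zy /\ Pr y.
Proof.
  intros [w [Hw H]]. destruct (Hcof w Hw) as [y [zy [Hy [Hzy [Hwzy Hp]]]]].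
  exists y, zy. split; [|split]; auto. apply (H w Hw (ptle_refl _) y zy); auto.
Qed.

Lemma near_of_chain (Pr : pt A -> Prop) :
  eventually B ptle (fun w => forall y zy, attached y zy -> B zy -> ptle w zy -> Pr y) -> near Pr.
Proof.
  apply eventually_mono. intros w _ H y zy Hy Hzy Hwzy _. apply (H y zy); auto.
Qed.

Lemma near_always (Pr : pt A -> Prop) : (forall y, profile y = p -> Pr y) -> near Pr.
Proof. intros H. exists m. split; [apply ul_B_m|]. intros v _ _ y zy _ _ _ Hp. auto. Qed.

Lemma near_decided a : exists v : Prop, near (fun y => mem y a <-> v).
Proof.
  revert a. apply (generated_ind gens Hgen).
  - exists False. apply near_always. intros y _. split; [apply mem_bot|tauto].
  - exists True. apply near_always. intros y _. split; auto using mem_top.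
  - intros a b [va Ha] [vb Hb]. exists (va /\ vb).
    eapply eventually_mono; [|apply near_and; [exact Ha|exact Hb]].
    intros w _ H y zy Hy Hzy Hwzy Hp. rewrite mem_meet, (proj1 (H y zy Hy Hzy Hwzy Hp)).
    rewrite (proj2 (H y zy Hy Hzy Hwzy Hp)). tauto.
  - intros a b [va Ha] [vb Hb]. exists (va \/ vb).
    eapply eventually_mono; [|apply near_and; [exact Ha|exact Hb]].
    intros w _ H y zy Hy Hzy Hwzy Hp. rewrite mem_join, (proj1 (H y zy Hy Hzy Hwzy Hp)).
    rewrite (proj2 (H y zy Hy Hzy Hwzy Hp)). tauto.
  - intros a b [va Ha] [vb Hb].
    exists ((va -> vb) /\ forall Q, ptle x Q -> mem Q a -> mem Q b).
    destruct (eventually_and B ptle ptle_trans ul_directed _ _ (near_and _ _ Ha Hb)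
                (ul_eventually_agree_list [a; b])) as [w [Hw H]].
    exists w. split; auto. intros v Hv Hwv y zy Hy Hzy Hvzy Hp.
    destruct (H v Hv Hwv) as [Hnear _].
    rewrite (mem_imp_attached y zy a b Hy), (proj1 (Hnear y zy Hy Hzy Hvzy Hp)).
    rewrite (proj2 (Hnear y zy Hy Hzy Hvzy Hp)), (ul_upset_imp_iff w zy a b); auto.
    + tauto.
    + eapply ptle_trans; eauto.
    + intros u Hu Hwu. split; apply (proj2 (H u Hu Hwu)); simpl; auto.
  - intros a b [va Ha] [vb Hb]. exists (va /\ ~ vb).
    eapply eventually_mono; [|apply near_and; [exact Ha|exact Hb]].
    intros w _ H y zy Hy Hzy Hwzy Hp. rewrite (mem_coimp_minimal y a b (proj1 (proj1 Hy))).
    rewrite (proj1 (H y zy Hy Hzy Hwzy Hp)), (proj2 (H y zy Hy Hzy Hwzy Hp)). tauto.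
  - intros g Hg. destruct (Hcof m ul_B_m) as [y0 [_ [_ [_ [_ Hy0]]]]]. exists (mem y0 g).
    apply near_always. intros y Hy. apply profile_mem; auto. congruence.
Qed.

Definition limit_filter a := near (fun y => mem y a).

Lemma limit_filter_iff a (v : Prop) : near (fun y => mem y a <-> v) -> (limit_filter a <-> v).
Proof.
  intros Hv. split.
  - intros Ha. destruct (near_witness _ (near_and _ _ Hv Ha)) as [y [zy [_ [_ [E K]]]]]. tauto.
  - intros K. eapply eventually_mono; [|exact Hv].
    intros w _ H y zy Hy Hzy Hwzy Hp. apply (H y zy); auto.
Qed.

Lemma limit_filter_prime : prime_filter limit_filter.
Proof.
  split; [|split; [|split; [|split]]].
  - apply near_always. intros y _. apply mem_top.
  - intros H. destruct (near_witness _ H) as [y [zy [_ [_ K]]]]. exact (mem_bot _ K).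
  - intros a b Hab. apply eventually_mono.
    intros w _ H y zy Hy Hzy Hwzy Hp. eapply mem_up; [exact Hab|]. apply (H y zy); auto.
  - intros a b Ha Hb. eapply eventually_mono; [|apply near_and; [exact Ha|exact Hb]].
    intros w _ H y zy Hy Hzy Hwzy Hp. apply mem_meet, (H y zy); auto.
  - intros a b Hab. destruct (near_decided a) as [va Ha], (near_decided b) as [vb Hb].
    rewrite (limit_filter_iff a va Ha), (limit_filter_iff b vb Hb).
    destruct (near_witness _ (near_and _ _ Hab (near_and _ _ Ha Hb)))
      as [y [zy [_ [_ [K [Ea Eb]]]]]].
    apply mem_join in K. tauto.
Qed.

Definition limit_pt : pt A := exist _ limit_filter limit_filter_prime.

Lemma limit_pt_le : ptle limit_pt x.
Proof.
  intros a Ha. destruct Ha as [w [Hw H]]. destruct (Hcof w Hw) as [y [zy [Hy [Hzy [Hwzy Hp]]]]].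
  apply (ptlt_le _ _ (proj2 Hzy)), (attached_le y zy Hy), (H w Hw (ptle_refl _) y zy); auto.
Qed.

Lemma limit_pt_minimal : minimal_pt limit_pt.
Proof.
  intros Q HQ. apply NNPP; intro HQp. destruct (ptlt_sep Q limit_pt (conj HQ HQp)) as [b [Hb1 Hb2]].
  assert (Hc : mem limit_pt (coimp top b)) by (eapply mem_coimp_of_below; eauto; apply mem_top).
  destruct (near_witness _ (near_and _ _ Hc Hb1)) as [y [zy [[[Hymin _] _] [_ [K1 K2]]]]].
  apply mem_coimp_minimal in K1; tauto.
Qed.

(* Above the attachment point of a leaf near [x], [c] holds at all chain points; but [c]
   fails at a chain point [u] with [m < u < x] where [cut d] holds. *)
Lemma limit_pt_imp_cut d c : ~ mem m d -> mem x c -> mem limit_pt (imp (cut d) c).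
Proof.
  intros Hd Hc. apply near_of_chain. destruct (ul_eventually_agree c) as [w [Hw Hagree]].
  exists w. split; auto. intros v Hv Hwv y zy Hy Hzy Hvzy.
  rewrite (mem_imp_attached y zy _ _ Hy). split.
  - intros K. exfalso. apply (leaf_not_chain y (proj1 Hy)), (mem_cut d y Hd), K.
  - intros Q HQ _. assert (HQC : in_chain Q) by (eapply in_chain_up; [apply Hzy|exact HQ]).
    destruct (chain_lt_or_ge Q x HQC ul_x_chain) as [K|K]; [|apply K, Hc].
    apply (Hagree Q (conj HQC K)); auto. eapply ptle_trans; [exact Hwv|eapply ptle_trans; eauto].
Qed.

Lemma limit_pt_not_below u : ptlt m u -> ptlt u x -> ~ ptle limit_pt u.
Proof.
  intros Hmu Hux Hle.
  destruct (ptlt_sep m u Hmu) as [d [Hd1 Hd2]]. destruct (ptlt_sep u x Hux) as [c [Hc1 Hc2]].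
  apply Hc2. eapply mem_imp_up; [apply (limit_pt_imp_cut d c); auto|exact Hle|].
  apply mem_cut; auto. split; auto. apply ptlt_le, Hmu.
Qed.

Lemma limit_pt_attached : attached limit_pt x.
Proof.
  assert (Hleaf : leaf limit_pt).
  { split; [apply limit_pt_minimal|intros Hpm].
    destruct (ul_no_max m ul_B_m) as [w [Hw Hmw]].
    apply (limit_pt_not_below w Hmw (proj2 Hw)). rewrite Hpm. apply ptlt_le, Hmw. }
  split; auto. split; [split; [apply limit_pt_le|]|].
  - intros E. apply (leaf_not_chain _ Hleaf). rewrite E. apply ul_x_chain.
  - intros [u [Hu1 Hu2]].
    assert (Hmu : ptlt m u).
    { split; [apply not_minimal_chain; intros Hu; apply (proj2 Hu1), Hu, Hu1|].
      intros <-. apply (proj2 Hleaf), Hm, Hu1. }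
    exact (limit_pt_not_below u Hmu Hu2 (ptlt_le _ _ Hu1)).
Qed.

Lemma limit_pt_profile : profile limit_pt = p.
Proof.
  destruct (Hcof m ul_B_m) as [y0 [_ [_ [_ [_ Hy0]]]]]. rewrite <- Hy0.
  apply map_ext_in. intros g Hg. apply bmem_eq. apply limit_filter_iff, near_always.
  intros y Hy. apply profile_mem; auto. congruence.
Qed.

End Limit.

Lemma ul_immpred_attached z : immpred z x -> attached z x.
Proof.
  intros Hz. split; auto. destruct (chain_or_leaf z) as [H|H]; auto.
  exfalso. apply (proj2 Hup). exists z. auto.
Qed.

Lemma ul_immpred_at_least_two : at_least_two (fun z => immpred z x).
Proof.
  destruct ul_two_cofinal_profiles as [p1 [p2 [Hne [H1 H2]]]].
  exists (limit_pt p1 H1), (limit_pt p2 H2). split; [|split; apply limit_pt_attached].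
  intros E. apply Hne. rewrite <- (limit_pt_profile p1 H1), <- (limit_pt_profile p2 H2), E.
  reflexivity.
Qed.

Lemma ul_immpred_at_most : at_most (2 ^ length gens) (fun z => immpred z x).
Proof.
  destruct (attached_at_most x) as [l [Hl Hin]].
  exists l. split; auto. intros z Hz. apply Hin, ul_immpred_attached, Hz.
Qed.

End UpLimit.

Lemma chain_upset_element z x : in_chain z -> immpred z x ->
  exists t, forall P, mem P t <-> in_chain P /\ ptle x P.
Proof.
  intros HzC Hzx. destruct (ptlt_sep z x (proj1 Hzx)) as [c [Hcx Hcz]].
  assert (Hcm : ~ mem m c) by (intros K; apply Hcz, HzC, K).
  exists (cut c). intros P. rewrite mem_cut; auto. split; intros [H1 H2]; split; auto.
  destruct (chain_lt_or_ge P x H1 (in_chain_up _ _ HzC (ptlt_le _ _ (proj1 Hzx)))) as [K|K]; auto.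
  exfalso. apply Hcz, (immpred_chain_le z x P Hzx HzC H1 K), H2.
Qed.

Lemma chain_element_sep z : ptlt m z ->
  exists u, mem z u /\ ~ mem m u /\ forall P, mem P u -> in_chain P.
Proof.
  intros Hmz. destruct (ptlt_sep m z Hmz) as [c [Hcz Hcm]].
  exists (cut c). split; [|split].
  - apply mem_cut; auto. split; auto. apply Hmz.
  - intros K. apply Hcm, (mem_cut c m Hcm), K.
  - intros P K. apply (mem_cut c P Hcm), K.
Qed.

Lemma chain_not_mem_below z u P : mem z u -> in_chain z -> in_chain P -> ~ mem P u -> ptlt P z.
Proof.
  intros Hzu HzC HPC HPu. destruct (chain_lt_or_ge P z HPC HzC) as [K|K]; auto.
  exfalso. apply HPu, K, Hzu.
Qed.

Section F1Map.
Variables x z : pt A.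
Variables u v : A.
Hypothesis Hmz : ptlt m z.
Hypothesis Hzx : immpred z x.
Hypothesis Hno_leaf_above : forall y zy, attached y zy -> ptle x zy -> False.
Hypothesis Hu_chain : forall P, mem P u -> in_chain P.
Hypothesis Hzu : mem z u.
Hypothesis Hmu : ~ mem m u.
Hypothesis Hv : forall P, mem P v <-> in_chain P /\ ptle x P.

Lemma f1_v_u P : mem P v -> mem P u.
Proof. intros [_ HxP]%Hv. apply HxP, (ptlt_le _ _ (proj1 Hzx)), Hzu. Qed.

Lemma f1_not_u P : ~ mem P u -> ptle P z.
Proof.
  intros HPu. destruct (chain_or_leaf P) as [HPC|HP].
  - apply ptlt_le, (chain_not_mem_below z u); auto.
  - destruct (attached_ex P HP) as [zP HzP]. eapply ptle_trans; [apply (attached_le _ _ HzP)|].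
    assert (HzPC := attached_chain _ _ HzP).
    destruct (chain_lt_or_ge zP x HzPC
                (in_chain_up _ _ (proj1 Hmz) (ptlt_le _ _ (proj1 Hzx)))) as [K|K].
    + apply (immpred_chain_le z x); auto.
    + exfalso. eauto.
Qed.

(* Fibres: the chain above [x] (a), the rest of [u] (b, contains [z]), the points below [z] (c). *)
Definition f1 P := if bmem P v then F1a else if bmem P u then F1b else F1c.

Lemma f1_a P : mem P v -> f1 P = F1a.
Proof. intros H. unfold f1. apply bmem_true in H. rewrite H. reflexivity. Qed.

Lemma f1_b P : ~ mem P v -> mem P u -> f1 P = F1b.
Proof.
  intros H1 H2. unfold f1. apply bmem_false in H1. apply bmem_true in H2. rewrite H1, H2.
  reflexivity.
Qed.

Lemma f1_c P : ~ mem P u -> f1 P = F1c.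
Proof.
  intros H. unfold f1. assert (H' : ~ mem P v) by (intros K; apply H, f1_v_u, K).
  apply bmem_false in H, H'. rewrite H, H'. reflexivity.
Qed.

Lemma f1_cases P : (mem P v /\ f1 P = F1a) \/ (~ mem P v /\ mem P u /\ f1 P = F1b) \/
                   (~ mem P u /\ f1 P = F1c).
Proof.
  destruct (classic (mem P v)) as [Hv'|Hv']; [left; auto using f1_a|right].
  destruct (classic (mem P u)) as [Hu|Hu]; [left|right]; auto using f1_b, f1_c.
Qed.

Lemma f1_onto : maps_onto (A := A) F1le.
Proof.
  assert (Hrv : mem r v) by (apply Hv; split; apply Hr).
  assert (Hzv : ~ mem z v) by (intros [_ K]%Hv; apply (ptlt_not_ge _ _ (proj1 Hzx)), K).
  exists f1. split; [|split; [|split; [|split]]].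
  - apply (continuous_of_agree f1 [u; v]). intros P Q H. unfold f1.
    rewrite (bmem_eq P Q v), (bmem_eq P Q u); auto; apply H; simpl; auto.
  - intros []; [exists r; apply f1_a|exists z; apply f1_b|exists m; apply f1_c]; auto.
  - intros P Q HPQ. unfold F1le.
    destruct (f1_cases P) as [[H1 ->]|[[H1 [H2 ->]]|[H1 ->]]].
    + rewrite (f1_a Q (HPQ _ H1)). auto.
    + destruct (f1_cases Q) as [[K1 ->]|[[K1 [K2 ->]]|[K1 ->]]]; simpl; auto.
    + destruct (f1 Q); simpl; auto.
  - intros P y [<-|Hy]; [exists P; split; [apply ptle_refl|reflexivity]|].
    destruct (f1_cases P) as [[H1 E]|[[H1 [H2 E]]|[H1 E]]]; rewrite E in Hy;
      destruct y; try destruct Hy; try (exists r; split; [apply Hr|apply f1_a; auto]).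
    exists z. split; [apply f1_not_u; auto|apply f1_b; auto].
  - intros P y [->|Hy]; [exists P; split; [apply ptle_refl|reflexivity]|].
    destruct (f1_cases P) as [[H1 E]|[[H1 [H2 E]]|[H1 E]]]; rewrite E in Hy;
      destruct y; try destruct Hy.
    + exists z. split; [|apply f1_b; auto].
      apply (ptle_trans _ x); [apply (ptlt_le _ _ (proj1 Hzx))|apply Hv, H1].
    + exists m. split; [apply Hv, H1|apply f1_c; auto].
    + exists m. split; [apply Hu_chain, H2|apply f1_c; auto].
Qed.

End F1Map.

Section F2Map.
Variables x z w yw : pt A.
Variables u v2 v3 : A.
Hypothesis Hmz : ptlt m z.
Hypothesis Hzx : immpred z x.
Hypothesis Hxw : ptlt x w.
Hypothesis Hyw : attached yw w.
Hypothesis Hband : forall y zy, attached y zy -> ptle x zy -> ptlt zy w -> False.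
Hypothesis Hu_chain : forall P, mem P u -> in_chain P.
Hypothesis Hzu : mem z u.
Hypothesis Hmu : ~ mem m u.
Hypothesis Hv2 : forall P, mem P v2 <-> in_chain P /\ ptle x P.
Hypothesis Hv3 : forall P, mem P v3 <-> in_chain P /\ ptle w P.

Let k := imp u v3.

Lemma f2_z_chain : in_chain z.
Proof. apply Hmz. Qed.

Lemma f2_x_chain : in_chain x.
Proof. eapply in_chain_up; [apply f2_z_chain|apply ptlt_le, Hzx]. Qed.

Lemma f2_v3_v2 P : mem P v3 -> mem P v2.
Proof. intros [HP HwP]%Hv3. apply Hv2. split; auto. eapply ptle_trans; [apply ptlt_le|]; eauto. Qed.

Lemma f2_v2_u P : mem P v2 -> mem P u.
Proof. intros [_ HxP]%Hv2. apply HxP, (ptlt_le _ _ (proj1 Hzx)), Hzu. Qed.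

Lemma f2_z_not_v3 : ~ mem z v3.
Proof.
  intros [_ K]%Hv3. apply (ptlt_not_ge _ _ (proj1 Hzx)).
  eapply ptle_trans; [apply ptlt_le, Hxw|exact K].
Qed.

Lemma f2_leaf_below y zy : attached y zy -> ~ ptle w zy -> ptle zy z.
Proof.
  intros Hy Hn. assert (HzyC := attached_chain _ _ Hy).
  destruct (chain_lt_or_ge zy w HzyC (in_chain_up _ _ f2_x_chain (ptlt_le _ _ Hxw))) as [K|K];
    [|contradiction].
  destruct (chain_lt_or_ge zy x HzyC f2_x_chain) as [K'|K'].
  - apply (immpred_chain_le z x); auto using f2_z_chain.
  - exfalso. eapply Hband; eauto.
Qed.

Lemma f2_k_leaf y zy : attached y zy -> (mem y k <-> ptle w zy).
Proof.
  intros Hy. split.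
  - intros Hk. apply NNPP; intro Hn. apply f2_z_not_v3.
    eapply mem_imp_up; [exact Hk| |exact Hzu].
    eapply ptle_trans; [apply (attached_le _ _ Hy)|apply (f2_leaf_below y zy Hy Hn)].
  - intros Hwzy. unfold k. rewrite (mem_imp_attached y zy u v3 Hy). split.
    + intros K. exfalso. apply (leaf_not_chain y (proj1 Hy)), Hu_chain, K.
    + intros Q HQ _. apply Hv3. split; [eapply in_chain_up; [apply (attached_chain _ _ Hy)|]|];
        eauto using ptle_trans.
Qed.

Lemma f2_k_chain P : in_chain P -> ~ mem P u -> ~ mem P k.
Proof.
  intros HP HPu Hk. apply f2_z_not_v3. eapply mem_imp_up; [exact Hk| |exact Hzu].
  apply ptlt_le, (chain_not_mem_below z u); auto using f2_z_chain.
Qed.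

Lemma f2_d_below P : ~ mem P u -> ~ mem P k -> ptle P z.
Proof.
  intros HPu HPk. destruct (chain_or_leaf P) as [HP|HP].
  - apply ptlt_le, (chain_not_mem_below z u); auto using f2_z_chain.
  - destruct (attached_ex P HP) as [zP HzP].
    eapply ptle_trans; [apply (attached_le _ _ HzP)|]. apply (f2_leaf_below P zP HzP).
    intros K. apply HPk, (f2_k_leaf P zP HzP), K.
Qed.

Lemma f2_c_below P : ~ mem P v2 -> mem P u -> ptle P x.
Proof.
  intros HPv HPu. destruct (chain_lt_or_ge P x (Hu_chain P HPu) f2_x_chain) as [K|K].
  - apply ptlt_le, K.
  - exfalso. apply HPv, Hv2. split; auto.
Qed.

(* Fibres: the chain above [w] (a), the chain in [[x, w)] (b), the rest of [u] (c, contains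
   [z]), the leaves attached at or above [w] (a'), and the points below [z] (d). *)
Definition f2 P :=
  if bmem P v3 then F2a else if bmem P v2 then F2b else if bmem P u then F2c
  else if bmem P k then F2a' else F2d.

Lemma f2_cases P :
  (mem P v3 /\ f2 P = F2a) \/ (~ mem P v3 /\ mem P v2 /\ f2 P = F2b) \/
  (~ mem P v2 /\ mem P u /\ f2 P = F2c) \/ (~ mem P u /\ mem P k /\ f2 P = F2a') \/
  (~ mem P u /\ ~ mem P k /\ f2 P = F2d).
Proof.
  unfold f2.
  destruct (bmem P v3) eqn:E3; [left; split; auto; apply bmem_true, E3|right].
  apply bmem_false in E3.
  destruct (bmem P v2) eqn:E2; [left; split; auto; split; auto; apply bmem_true, E2|right].
  apply bmem_false in E2.
  destruct (bmem P u) eqn:E1; [left; split; auto; split; auto; apply bmem_true, E1|right].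
  apply bmem_false in E1.
  destruct (bmem P k) eqn:Ek; [left|right]; split; auto; split; auto;
    [apply bmem_true, Ek|apply bmem_false, Ek].
Qed.

Lemma f2_values P :
  (mem P v3 -> f2 P = F2a) /\ (~ mem P v3 -> mem P v2 -> f2 P = F2b) /\
  (~ mem P v2 -> mem P u -> f2 P = F2c) /\ (~ mem P u -> mem P k -> f2 P = F2a') /\
  (~ mem P u -> ~ mem P k -> f2 P = F2d).
Proof.
  pose proof (f2_v3_v2 P). pose proof (f2_v2_u P).
  destruct (f2_cases P) as [[H1 E]|[[H1 [H2 E]]|[[H1 [H2 E]]|[[H1 [H2 E]]|[H1 [H2 E]]]]]];
    rewrite E; repeat split; intros; try reflexivity; exfalso; tauto.
Qed.

Lemma f2_monotone P Q : ptle P Q -> F2le (f2 P) (f2 Q).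
Proof.
  intros HPQ. unfold F2le.
  destruct (f2_cases P) as [[H1 ->]|[[H1 [H2 ->]]|[[H1 [H2 ->]]|[[H1 [H2 ->]]|[H1 [H2 ->]]]]]].
  - rewrite (proj1 (f2_values Q)); auto.
  - destruct (f2_cases Q) as [[K1 ->]|[[K1 [K2 ->]]|[[K1 [K2 ->]]|[[K1 [K2 ->]]|[K1 [K2 ->]]]]]];
      simpl; auto; exfalso; eauto using f2_v2_u.
  - destruct (f2_cases Q) as [[K1 ->]|[[K1 [K2 ->]]|[[K1 [K2 ->]]|[[K1 [K2 ->]]|[K1 [K2 ->]]]]]];
      simpl; auto; exfalso; eauto.
  - destruct (chain_or_leaf P) as [HC|HL]; [exfalso; exact (f2_k_chain P HC H1 H2)|].
    destruct (attached_ex P HL) as [zP HzP].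
    destruct (above_attached P zP Q HzP HPQ) as [<-|K]; [left; symmetry; apply f2_values; auto|].
    rewrite (proj1 (f2_values Q)); [right; simpl; auto|]. apply Hv3. split.
    + eapply in_chain_up; [apply (attached_chain _ _ HzP)|exact K].
    + eapply ptle_trans; [apply (f2_k_leaf P zP HzP); auto|exact K].
  - destruct (f2_cases Q) as [[K1 ->]|[[K1 [K2 ->]]|[[K1 [K2 ->]]|[[K1 [K2 ->]]|[K1 [K2 ->]]]]]];
      simpl; auto.
    destruct (chain_or_leaf Q) as [HC|HL]; [exfalso; exact (f2_k_chain Q HC K1 K2)|].
    exfalso. assert (P = Q) as <- by (apply (proj1 HL); auto). contradiction.
Qed.

Lemma f2_continuous : continuous_to f2.
Proof.
  apply (continuous_of_agree f2 [u; v2; v3; k]). intros P Q H. unfold f2.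
  rewrite (bmem_eq P Q u), (bmem_eq P Q v2), (bmem_eq P Q v3), (bmem_eq P Q k);
    auto; apply H; simpl; auto.
Qed.

Lemma f2_onto : maps_onto (A := A) F2le.
Proof.
  assert (Hrv3 : mem r v3) by (apply Hv3; split; apply Hr).
  assert (HwC : in_chain w) by (eapply in_chain_up; [apply f2_x_chain|apply ptlt_le, Hxw]).
  assert (Hzv2 : ~ mem z v2) by (intros [_ K]%Hv2; apply (ptlt_not_ge _ _ (proj1 Hzx)), K).
  assert (Hxv2 : mem x v2) by (apply Hv2; split; [apply f2_x_chain|apply ptle_refl]).
  assert (Hxv3 : ~ mem x v3) by (intros [_ K]%Hv3; apply (ptlt_not_ge _ _ Hxw), K).
  assert (Hywu : ~ mem yw u) by (intros K; apply (leaf_not_chain yw (proj1 Hyw)), Hu_chain, K).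
  assert (Hywk : mem yw k) by (apply (f2_k_leaf yw w Hyw), ptle_refl).
  assert (Hmk : ~ mem m k) by (apply f2_k_chain; auto; apply ptle_refl).
  exists f2. split; [|split; [|split; [|split]]].
  - apply f2_continuous.
  - intros []; [exists r|exists x|exists z|exists m|exists yw]; apply f2_values; auto.
  - apply f2_monotone.
  - intros P y [<-|Hy]; [exists P; split; [apply ptle_refl|reflexivity]|].
    destruct (f2_cases P) as [[H1 E]|[[H1 [H2 E]]|[[H1 [H2 E]]|[[H1 [H2 E]]|[H1 [H2 E]]]]]];
      rewrite E in Hy; destruct y; try destruct Hy;
      try (exists r; split; [apply Hr|apply f2_values; auto]; fail).
    + exists x. split; [apply f2_c_below; auto|apply f2_values; auto].
    + exists x. split; [|apply f2_values; auto].
      eapply ptle_trans; [apply f2_d_below; auto|apply (ptlt_le _ _ (proj1 Hzx))].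
    + exists z. split; [apply f2_d_below; auto|apply f2_values; auto].
  - intros P y [->|Hy]; [exists P; split; [apply ptle_refl|reflexivity]|].
    destruct (f2_cases P) as [[H1 E]|[[H1 [H2 E]]|[[H1 [H2 E]]|[[H1 [H2 E]]|[H1 [H2 E]]]]]];
      rewrite E in Hy; destruct y; try destruct Hy.
    + apply Hv3 in H1. exists x. split; [|apply f2_values; auto].
      eapply ptle_trans; [apply ptlt_le, Hxw|apply H1].
    + apply Hv3 in H1. exists z. split; [|apply f2_values; auto].
      eapply ptle_trans; [apply (ptlt_le _ _ (proj1 Hzx))|].
      eapply ptle_trans; [apply ptlt_le, Hxw|apply H1].
    + apply Hv3 in H1. exists m. split; [apply H1|apply f2_values; auto].
    + apply Hv3 in H1. exists yw. split; [|apply f2_values; auto].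
      eapply ptle_trans; [apply (attached_le _ _ Hyw)|apply H1].
    + apply Hv2 in H2. exists z. split; [|apply f2_values; auto].
      eapply ptle_trans; [apply (ptlt_le _ _ (proj1 Hzx))|apply H2].
    + apply Hv2 in H2. exists m. split; [apply H2|apply f2_values; auto].
    + exists m. split; [apply Hu_chain, H2|apply f2_values; auto].
Qed.

End F2Map.

Lemma above_separator x : in_chain x -> (x = r \/ exists xp, immpred x xp) ->
  exists q, ~ mem x q /\ forall Q, in_chain Q -> ptlt x Q -> mem Q q.
Proof.
  intros HxC [->|[xp Hxp]].
  - exists bot. split; [apply mem_bot|]. intros Q _ HQ. exfalso. apply (ptlt_not_ge _ _ HQ), Hr.
  - destruct (ptlt_sep x xp (proj1 Hxp)) as [q [Hq1 Hq2]]. exists q. split; auto.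
    intros Q HQC HxQ. apply (immpred_chain_ge x xp Q); auto.
Qed.

Lemma leaf_sep y : leaf y -> exists c, mem y c /\ ~ mem m c.
Proof.
  intros Hy. apply NNPP; intro H. apply (proj2 Hy), Hm.
  intros c Hc. apply NNPP; intro Hc'. apply H. exists c. auto.
Qed.

(* A point with the same [h], [imp h t], [imp t q] and generators as [y] is a leaf
   containing [c] ([h]) attached at or above [x] ([imp h t]) but not strictly above
   ([imp t q]), with the profile of [y]. *)
Lemma attached_isolated y x t q : attached y x ->
  (forall P, mem P t <-> in_chain P /\ ptle x P) ->
  ~ mem x q -> (forall Q, in_chain Q -> ptlt x Q -> mem Q q) ->
  exists es, forall P, agree es P y -> P = y.
Proof.
  intros Hy Ht Hxq Hq. assert (HxC := attached_chain _ _ Hy).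
  destruct (leaf_sep y (proj1 Hy)) as [c [Hcy Hcm]].
  set (h := coimp top c).
  assert (Hh_chain : forall Q, in_chain Q -> mem Q h).
  { intros Q HQ. eapply mem_coimp_of_below; [exact HQ|apply mem_top|exact Hcm]. }
  assert (Hyh : ~ mem y h).
  { unfold h. rewrite (mem_coimp_minimal y _ _ (proj1 (proj1 Hy))). tauto. }
  assert (Hyht : mem y (imp h t)).
  { rewrite (mem_imp_attached y x h t Hy). split; [tauto|].
    intros Q HQ _. apply Ht. split; auto. eapply in_chain_up; eauto. }
  assert (Hytq : ~ mem y (imp t q)).
  { intros K. apply Hxq. eapply mem_imp_up; [exact K|apply attached_le, Hy|].
    apply Ht. split; auto using ptle_refl. }
  exists (h :: imp h t :: imp t q :: gens). intros P HP.
  assert (HPh : ~ mem P h) by (rewrite (HP h); simpl; auto).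
  assert (HPht : mem P (imp h t)) by (rewrite (HP (imp h t)); simpl; auto).
  assert (HPtq : ~ mem P (imp t q)) by (rewrite (HP (imp t q)); simpl; auto).
  destruct (chain_or_leaf P) as [HPC|HPL]; [exfalso; auto|].
  destruct (attached_ex P HPL) as [zP HzP]. assert (HzPC := attached_chain _ _ HzP).
  destruct (chain_lt_or_ge zP x HzPC HxC) as [K|K].
  - exfalso. assert (K1 : mem zP t).
    { eapply mem_imp_up; [exact HPht|apply attached_le, HzP|apply Hh_chain, HzPC]. }
    apply Ht in K1. apply (ptlt_not_ge _ _ K), K1.
  - destruct (classic (x = zP)) as [<-|Hxz].
    + apply (attached_profile_inj P y x); auto.
      apply map_ext_in. intros g Hg. apply bmem_eq, HP. simpl; auto.
    + exfalso. apply HPtq. rewrite (mem_imp_attached P zP t q HzP). split.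
      * intros [K' _]%Ht. exfalso. exact (leaf_not_chain P HPL K').
      * intros Q HQ _. apply Hq; [eapply in_chain_up; eauto|].
        apply (ptlt_le_trans x zP Q); auto. split; auto.
Qed.

Section F3Map.
Variables x y1 y2 : pt A.
Variables t : A.
Variables es1 es2 : list A.
Hypothesis Hy1 : attached y1 x.
Hypothesis Hy2 : attached y2 x.
Hypothesis Hne : y1 <> y2.
Hypothesis Ht : forall P, mem P t <-> in_chain P /\ ptle x P.
Hypothesis Hes1 : forall P, agree es1 P y1 -> P = y1.
Hypothesis Hes2 : forall P, agree es2 P y2 -> P = y2.

Definition f3 P :=
  if bmem P t then F3t
  else if excluded_middle_informative (P = y1) then F3u2
  else if excluded_middle_informative (P = y2) then F3u3 else F3u1.

Lemma f3_leaf_not_t y : attached y x -> ~ mem y t.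
Proof. intros Hy [K _]%Ht. exact (leaf_not_chain y (proj1 Hy) K). Qed.

Lemma f3_cases P :
  (mem P t /\ f3 P = F3t) \/ (P = y1 /\ f3 P = F3u2) \/ (P = y2 /\ f3 P = F3u3) \/
  (~ mem P t /\ P <> y1 /\ P <> y2 /\ f3 P = F3u1).
Proof.
  unfold f3. destruct (bmem P t) eqn:E; [left; split; auto; apply bmem_true, E|right].
  apply bmem_false in E.
  destruct excluded_middle_informative as [->|H1]; [left; auto|right].
  destruct excluded_middle_informative as [->|H2]; [left; auto|right; auto].
Qed.

Lemma f3_t P : mem P t -> f3 P = F3t.
Proof. intros H. unfold f3. apply bmem_true in H. rewrite H. reflexivity. Qed.

Lemma f3_y1 : f3 y1 = F3u2.
Proof.
  destruct (f3_cases y1) as [[K _]|[[_ E]|[[E _]|[_ [K _]]]]]; auto;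
    [exfalso; exact (f3_leaf_not_t y1 Hy1 K)|congruence|congruence].
Qed.

Lemma f3_y2 : f3 y2 = F3u3.
Proof.
  destruct (f3_cases y2) as [[K _]|[[E _]|[[_ E]|[_ [_ [K _]]]]]]; auto;
    [exfalso; exact (f3_leaf_not_t y2 Hy2 K)|congruence|congruence].
Qed.

Lemma f3_above_leaf y P : attached y x -> ptle y P -> P = y \/ mem P t.
Proof.
  intros Hy HP. destruct (above_attached y x P Hy HP) as [K|K]; auto. right. apply Ht.
  split; auto. eapply in_chain_up; [apply (attached_chain _ _ Hy)|exact K].
Qed.

Lemma f3_continuous : continuous_to f3.
Proof.
  apply (continuous_of_agree f3 (t :: es1 ++ es2)). intros P Q H. unfold f3.
  rewrite (bmem_eq P Q t) by (apply H; simpl; auto).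
  assert (E : forall es y, (forall P, agree es P y -> P = y) -> incl es (es1 ++ es2) ->
               (P = y <-> Q = y)).
  { intros es y Hes Hincl. split; intros <-; apply Hes; intros e He; [symmetry|];
      apply H; right; apply Hincl, He. }
  pose proof (E es1 y1 Hes1 (incl_appl _ (incl_refl _))) as E1.
  pose proof (E es2 y2 Hes2 (incl_appr _ (incl_refl _))) as E2.
  destruct (excluded_middle_informative (P = y1)), (excluded_middle_informative (Q = y1)),
    (excluded_middle_informative (P = y2)), (excluded_middle_informative (Q = y2));
    first [reflexivity|exfalso; tauto].
Qed.

Lemma f3_onto : maps_onto (A := A) F3le.
Proof.
  assert (Hmt : ~ mem m t).
  { intros [_ K]%Ht. apply (ptlt_not_ge _ _ (attached_above_m _ _ Hy1)), K. }
  assert (Hm1 : m <> y1) by (intros E; apply (proj2 (proj1 Hy1)); auto).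
  assert (Hm2 : m <> y2) by (intros E; apply (proj2 (proj1 Hy2)); auto).
  exists f3. split; [|split; [|split; [|split]]].
  - apply f3_continuous.
  - intros []; [exists r; apply f3_t, Ht; split; apply Hr|exists m|exists y1; apply f3_y1|
                 exists y2; apply f3_y2].
    destruct (f3_cases m) as [[K _]|[[K _]|[[K _]|[_ [_ [_ E]]]]]]; auto; contradiction.
  - intros P Q HPQ. unfold F3le.
    destruct (f3_cases P) as [[H1 ->]|[[-> ->]|[[-> ->]|[H1 [H2 [H3 ->]]]]]].
    + rewrite (f3_t Q (HPQ _ H1)). auto.
    + destruct (f3_above_leaf y1 Q Hy1 HPQ) as [->|K]; [rewrite f3_y1|rewrite (f3_t Q K)];
        simpl; auto.
    + destruct (f3_above_leaf y2 Q Hy2 HPQ) as [->|K]; [rewrite f3_y2|rewrite (f3_t Q K)];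
        simpl; auto.
    + destruct (f3_cases Q) as [[K1 ->]|[[-> _]|[[-> _]|[_ [_ [_ ->]]]]]]; simpl; auto;
        exfalso; [apply H2, (proj1 (proj1 Hy1))|apply H3, (proj1 (proj1 Hy2))]; auto.
  - intros P y [<-|Hy]; [exists P; split; [apply ptle_refl|reflexivity]|].
    exists r. split; [apply Hr|].
    destruct (f3_cases P) as [[_ E]|[[_ E]|[[_ E]|[_ [_ [_ E]]]]]]; rewrite E in Hy;
      destruct y; simpl in Hy; try contradiction; apply f3_t, Ht; split; apply Hr.
  - intros P y [->|Hy]; [exists P; split; [apply ptle_refl|reflexivity]|].
    destruct (f3_cases P) as [[H1 E]|[[_ E]|[[_ E]|[_ [_ [_ E]]]]]]; rewrite E in Hy;
      destruct y; simpl in Hy; try contradiction; apply Ht in H1.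
    + exists m. split; [apply H1|].
      destruct (f3_cases m) as [[K _]|[[K _]|[[K _]|[_ [_ [_ E']]]]]]; auto; contradiction.
    + exists y1. split; [eapply ptle_trans; [apply (attached_le _ _ Hy1)|apply H1]|apply f3_y1].
    + exists y2. split; [eapply ptle_trans; [apply (attached_le _ _ Hy2)|apply H1]|apply f3_y2].
Qed.

End F3Map.

Section Forbidden.
Hypothesis HF1 : ~ maps_onto (A := A) F1le.
Hypothesis HF2 : ~ maps_onto (A := A) F2le.
Hypothesis HF3 : ~ maps_onto (A := A) F3le.

Lemma chain_succ_or_top x : in_chain x -> x = r \/ exists xp, immpred x xp.
Proof.
  intros HxC. destruct (classic (x = r)) as [E|E]; [left; auto|right].
  apply chain_has_succ; auto.
Qed.

Lemma attached_unique x z : in_chain z -> immpred z x ->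
  forall y1 y2, attached y1 x -> attached y2 x -> y1 = y2.
Proof.
  intros HzC Hzx y1 y2 H1 H2. apply NNPP; intro Hne. apply HF3.
  assert (HxC := attached_chain _ _ H1).
  destruct (chain_upset_element z x HzC Hzx) as [t Ht].
  destruct (above_separator x HxC (chain_succ_or_top x HxC)) as [q [Hxq Hq]].
  destruct (attached_isolated y1 x t q H1 Ht Hxq Hq) as [es1 Hes1].
  destruct (attached_isolated y2 x t q H2 Ht Hxq Hq) as [es2 Hes2].
  apply (f3_onto x y1 y2 t es1 es2); auto.
Qed.

Lemma attached_exists x z : ptlt m z -> immpred z x -> exists y, attached y x.
Proof.
  intros Hmz Hzx. apply NNPP; intro Hn.
  assert (HzC : in_chain z) by apply Hmz.
  destruct (chain_element_sep z Hmz) as [u [Hzu [Hmu Hu]]].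
  destruct (chain_upset_element z x HzC Hzx) as [v Hv].
  destruct (classic (exists y zy, attached y zy /\ ptle x zy)) as [Hex|Hno].
  2:{ apply HF1, (f1_onto x z u v); auto. intros y zy H1 H2. apply Hno. eauto. }
  destruct (chain_least (fun w => ptle x w /\ exists y, attached y w))
    as [w [[Hxw [yw Hyw]] Hleast]].
  { intros w [Hxw _]. eapply in_chain_up; [apply HzC|].
    eapply ptle_trans; [apply (ptlt_le _ _ (proj1 Hzx))|exact Hxw]. }
  { destruct Hex as [y [zy [H1 H2]]]. exists zy. eauto. }
  assert (Hxw' : ptlt x w) by (split; auto; intros <-; apply Hn; eauto).
  assert (Hband : forall y zy, attached y zy -> ptle x zy -> ptlt zy w -> False).
  { intros y zy H1 H2 H3. apply (ptlt_not_ge _ _ H3), Hleast. eauto. }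
  destruct (classic (exists w', ptle m w' /\ immpred w' w)) as [[w' [Hw'C Hw'w]]|Hnw].
  - destruct (chain_upset_element w' w Hw'C Hw'w) as [v3 Hv3].
    apply HF2, (f2_onto x z w yw u v v3); auto.
  - assert (Hmw : ptlt m w).
    { eapply ptle_lt_trans; [apply HzC|]. eapply ptlt_le_trans; [apply (proj1 Hzx)|apply Hxw']. }
    assert (HxC : in_chain x) by (eapply in_chain_up; [apply HzC|apply ptlt_le, Hzx]).
    destruct (ul_attachments_cofinal w (conj Hmw Hnw) x (conj HxC Hxw'))
      as [y [zy [Hy [[_ Hzyw] Hxzy]]]].
    exact (Hband y zy Hy Hxzy Hzyw).
Qed.

Lemma immpred_of_m_at_most_two x : immpred m x -> at_most 2 (fun z => immpred z x).
Proof.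
  intros Hmx.
  assert (Hpred : forall z, immpred z x -> z = m \/ attached z x).
  { intros z Hz. destruct (chain_or_leaf z) as [HC|HL]; [left|right; split; auto].
    apply NNPP; intro E. apply (proj2 Hmx). exists z. split; [split; auto|exact (proj1 Hz)]. }
  destruct (classic (exists y, attached y x)) as [[y Hy]|Hno].
  - exists [m; y]. split; [simpl; lia|]. intros z Hz. destruct (Hpred z Hz) as [->|K].
    + left; reflexivity.
    + right; left. apply (attached_unique x m (ptle_refl m) Hmx); auto.
  - exists [m]. split; [simpl; lia|]. intros z Hz. destruct (Hpred z Hz) as [->|K].
    + left; reflexivity.
    + exfalso. eauto.
Qed.

Lemma immpred_chain_and_leaf x : ptlt m x -> ~ immpred m x -> ~ up_limit m x ->
  (exists! z, immpred z x /\ ptlt m z) /\ (exists! z, immpred z x /\ ~ ptlt m z).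
Proof.
  intros Hmx Hnim Hnup.
  assert (Hz : exists z, ptle m z /\ immpred z x) by (apply NNPP; intro H; apply Hnup; split; auto).
  destruct Hz as [z [Hmz Hzx]].
  assert (Hmz' : ptlt m z) by (split; auto; intros <-; contradiction).
  split.
  - exists z. split; [split; auto|]. intros z' [Hz'x Hmz'2].
    destruct (chain_lt_or_ge z z' Hmz (proj1 Hmz'2)) as [K|K].
    + exfalso. apply (proj2 Hzx). exists z'. split; auto. apply Hz'x.
    + apply ptle_antisym; auto. apply (immpred_chain_le z' x z); auto; [apply Hmz'2|apply Hzx].
  - destruct (attached_exists x z Hmz' Hzx) as [y Hy]. exists y. split.
    + split; [apply Hy|]. intros [K _]. exact (leaf_not_chain y (proj1 Hy) K).
    + intros z' [Hz'x Hz'm]. destruct (chain_or_leaf z') as [HC|HL].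
      * exfalso. apply Hz'm. split; auto. intros <-. contradiction.
      * apply (attached_unique x z Hmz Hzx y z' Hy). split; auto.
Qed.

End Forbidden.

Lemma chain_infinite_well_order : infinite_alg A -> infinite_well_order_up m.
Proof.
  intros Hinf. split; [|split].
  - intros; apply chain_total; auto.
  - apply chain_least.
  - apply chain_infinite, Hinf.
Qed.

Lemma no_down_limits x : ~ down_limit m r x.
Proof. intros [H1 [H2 H3]]. exact (no_down_limit x H1 H2 H3). Qed.

End CoTree.

Theorem theorem3p19 (n : nat) (A : biHeyting) (r m : pt A) :
  0 < n ->
  n_generated n A ->
  infinite_alg A ->
  subdirectly_irreducible A ->
  validates_LFC A ->
  greatest_pt r ->
  minimal_pt m ->
  (forall x, ptlt m x \/ minimal_pt x) ->
  (forall y, minimal_pt y -> y <> m ->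
     exists z, immpred y z /\ ptlt m z /\ forall w, immpred y w -> w = z) ->
  (* (i) *)
  (forall x, up_limit m x ->
     at_least_two (fun z => immpred z x) /\
     at_most (Nat.pow 2 n) (fun z => immpred z x)) /\
  (* (ii) *)
  (forall x, ~ down_limit m r x) /\
  (* (iii) *)
  infinite_well_order_up m /\
  (* (iv) *)
  (forall x, immpred m x -> at_most 2 (fun z => immpred z x)) /\
  (* (v) *)
  (forall x, ptlt m x -> ~ immpred m x -> ~ up_limit m x ->
     (exists! z, immpred z x /\ ptlt m z) /\
     (exists! z, immpred z x /\ ~ ptlt m z)).
Proof.
  intros _ [gens [<- Hgen]] Hinf _ [HLC [_ [HF1 [HF2 HF3]]]] Hr Hm Hcov Hatt.
  split; [|split; [|split; [|split]]].
  - intros x Hx. split.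
    + eapply ul_immpred_at_least_two; eauto.
    + eapply ul_immpred_at_most; eauto.
  - intros x. eapply no_down_limits; eauto.
  - eapply chain_infinite_well_order; eauto.
  - intros x. eapply immpred_of_m_at_most_two; eauto.
  - intros x. eapply immpred_chain_and_leaf; eauto.
Qed.
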